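(* Assume the composite setting below with conditions (G1), (G2) and (D). Apply Algorithm TR to $f(u)=J(S(u),u)$ with the model function $\phi$ defined below, and suppose there is $C_H>0$ with $\|H_k\|\le C_H$ for all $k$. If the algorithm does not terminate after finitely many iterations, then every accumulation point $\bar u$ of the iterates is C-stationary, i.e. $0\in\partial f(\bar u)$.
   Context: Composite setting: $J:\mathbb{R}^m\times\mathbb{R}^n\to\mathbb{R}$ continuously differentiable; $S:\mathbb{R}^n\to\mathbb{R}^m$ locally Lipschitz continuous and directionally differentiable (directional derivative $S'(u;h)$); $f(u):=J(S(u),u)$. $\partial_B S(u)$ is the Bouligand subdifferential: all limits $\lim_j S'(u_j)$ with $u_j\to u$ and $S$ differentiable at $u_j$. $\partial f(u)$ is the Clarke subdifferential of $f$. $B_r(x)$ is the closed Euclidean ball; $\|\cdot\|$ is the Euclidean/spectral norm; $a/0:=+\infty$ in minima. For each $u\in\mathbb{R}^n$, $\Delta>0$ let $\mathcal G(u,\Delta)\subset\mathbb{R}^{m\times n}$ be a nonempty bounded set, and define the model $\phi(u,\Delta;d):=\sup_{G\in\mathcal G(u,\Delta)}\langle G^\top\nabla_yJ(S(u),u)+\nabla_uJ(S(u),u),d\rangle$ and $\psi(u,\Delta):=-\min_{\|h\|\le1}\phi(u,\Delta;h)$. Conditions: (G1) $\bigcup_{\xi\in B_\Delta(u)}\partial_BS(\xi)\subseteq\mathcal G(u,\Delta)$ for all $u$, $\Delta>0$; (G2) if $(u_k,\Delta_k)\to(u,0)$ with $0\notin\partial f(u)$, then $\sup_{G\in\mathcal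 G(u_k,\Delta_k)}\inf_{W\in\partial_BS(u)}\|G-W\|\to0$; (D) for all $u,h\in\mathbb{R}^n$ there is $G\in\partial_BS(u)$ with $S'(u;h)=Gh$. Algorithm TR: choose $\Delta_{\min}>0$, $0<\eta_1<\eta_2<1$, $0<\beta_1<1<\beta_2$, $0<\mu\le1$, $u_0$, $\Delta_0>\Delta_{\min}$. For $k=0,1,\dots$: choose $g_k\in\partial f(u_k)$ and symmetric $H_k$. If $g_k=0$ stop. If $\Delta_k\ge\Delta_{\min}$: choose $d_k$ with $\|d_k\|\le\Delta_k$ and $f(u_k)-q_k(d_k)\ge\frac{\mu}{2}\|g_k\|\min\{\Delta_k,\|g_k\|/\|H_k\|\}$, $q_k(d)=f(u_k)+\langle g_k,d\rangle+\frac12d^\top H_kd$, and $\rho_k=\frac{f(u_k)-f(u_k+d_k)}{f(u_k)-q_k(d_k)}$. If $\Delta_k<\Delta_{\min}$: with $\psi_k=\psi(u_k,\Delta_k)$ choose $d_k$ with $\|d_k\|\le\Delta_k$ and $f(u_k)-\tilde q_k(d_k)\ge\frac{\mu}{2}\psi_k\min\{\Delta_k,\psi_k/\|H_k\|\}$, $\tilde q_k(d)=f(u_k)+\phi(u_k,\Delta_k;d)+\frac12d^\top H_kd$, and $\rho_k=\frac{f(u_k)-f(u_k+d_k)}{f(u_k)-\tilde q_k(d_k)}$ if $\psi_k>\|g_k\|\Delta_k$, $\rho_k=0$ otherwise. Update: $u_{k+1}=u_k$ if $\rho_k\le\eta_1$, else $u_{k+1}=u_k+d_k$; $\Delta_{k+1}=\beta_1\Delta_k$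 if $\rho_k\le\eta_1$, $\max\{\Delta_{\min},\Delta_k\}$ if $\eta_1<\rho_k\le\eta_2$, $\max\{\Delta_{\min},\beta_2\Delta_k\}$ if $\rho_k>\eta_2$. *)

From Stdlib Require Fin.
From Stdlib Require Import Reals Lra ClassicalEpsilon.
Open Scope R_scope.

Definition vec (n : nat) := Fin.t n -> R.
Definition mat (m n : nat) := Fin.t m -> Fin.t n -> R.

Fixpoint sumfin (n : nat) : (Fin.t n -> R) -> R :=
  match n return (Fin.t n -> R) -> R with
  | O => fun _ => 0
  | Datatypes.S p => fun f => f Fin.F1 + sumfin p (fun i => f (Fin.FS i))
  end.

Definition vzero {n} : vec n := fun _ => 0.
Definition vadd {n} (x y : vec n) : vec n := fun i => x i + y i.
Definition vsub {n} (x y : vec n) : vec n := fun i => x i - y i.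
Definition vscal {n} (a : R) (x : vec n) : vec n := fun i => a * x i.
Definition dot {n} (x y : vec n) : R := sumfin n (fun i => x i * y i).
Definition vnorm {n} (x : vec n) : R := sqrt (dot x x).

Definition mvmul {m n} (A : mat m n) (x : vec n) : vec m :=
  fun i => sumfin n (fun j => A i j * x j).
Definition mtr {m n} (A : mat m n) : mat n m := fun j i => A i j.
Definition msub {m n} (A B : mat m n) : mat m n := fun i j => A i j - B i j.
Definition symmetric {n} (A : mat n n) : Prop := forall i j, A i j = A j i.

(* The least upper bound (meaningful when E is nonempty and bounded above). *)
Definition Rsup (E : R -> Prop) : R := epsilon (inhabits 0) (fun s => is_lub E s).
(* The greatest lower bound (meaningful when E is nonempty and bounded below). *)
Definition Rinf (E : R -> Prop) : R := - Rsup (fun x => E (- x)).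

Definition mnorm {m n} (A : mat m n) : R :=
  Rsup (fun s => exists h : vec n, vnorm h <= 1 /\ s = vnorm (mvmul A h)).

(* min{D, a/b} with the convention a/0 := +infinity *)
Definition min_div (D a b : R) : R :=
  if Req_EM_T b 0 then D else Rmin D (a / b).

Definition Rseq_conv (x : nat -> R) (l : R) : Prop :=
  forall eps, 0 < eps -> exists N, forall k, (N <= k)%nat -> Rabs (x k - l) < eps.
Definition vseq_conv {n} (x : nat -> vec n) (l : vec n) : Prop :=
  forall eps, 0 < eps -> exists N, forall k, (N <= k)%nat -> vnorm (vsub (x k) l) < eps.
Definition mseq_conv {m n} (x : nat -> mat m n) (l : mat m n) : Prop :=
  forall eps, 0 < eps -> exists N, forall k, (N <= k)%nat -> mnorm (msub (x k) l) < eps.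
Definition accumulation_point {n} (x : nat -> vec n) (ubar : vec n) : Prop :=
  forall eps, 0 < eps -> forall N, exists k, (N <= k)%nat /\ vnorm (vsub (x k) ubar) < eps.

Definition frechet_diff {m n} (S : vec n -> vec m) (u : vec n) (A : mat m n) : Prop :=
  forall eps, 0 < eps -> exists del, 0 < del /\
    forall h, vnorm h < del ->
      vnorm (vsub (vsub (S (vadd u h)) (S u)) (mvmul A h)) <= eps * vnorm h.

Definition loc_lipschitz {m n} (S : vec n -> vec m) : Prop :=
  forall u, exists r L, 0 < r /\
    forall x y, vnorm (vsub x u) <= r -> vnorm (vsub y u) <= r ->
      vnorm (vsub (S x) (S y)) <= L * vnorm (vsub x y).

Definition dir_deriv {m n} (S : vec n -> vec m) (u h : vec n) (v : vec m) : Prop :=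
  forall eps, 0 < eps -> exists del, 0 < del /\
    forall t, 0 < t < del ->
      vnorm (vsub (vscal (/ t) (vsub (S (vadd u (vscal t h))) (S u))) v) <= eps.

Definition bouligand {m n} (S : vec n -> vec m) (u : vec n) (W : mat m n) : Prop :=
  exists (uj : nat -> vec n) (Aj : nat -> mat m n),
    vseq_conv uj u /\ (forall j, frechet_diff S (uj j) (Aj j)) /\ mseq_conv Aj W.

(* Clarke subdifferential: g in df(u) iff <g,h> <= f°(u;h) for all h, where
   f°(u;h) = limsup_{y -> u, t -> 0+} (f(y+th) - f(y))/t.  The inequality
   "a <= limsup" is written out: every neighbourhood contains quotients > a - eps. *)
Definition clarke_sub {n} (f : vec n -> R) (u g : vec n) : Prop :=
  forall h eps del, 0 < eps -> 0 < del ->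
    exists y t, vnorm (vsub y u) < del /\ 0 < t < del /\
      dot g h - eps < (f (vadd y (vscal t h)) - f y) / t.

Definition compf {m n} (J : vec m -> vec n -> R) (S : vec n -> vec m) (u : vec n) : R :=
  J (S u) u.

Definition has_gradients {m n} (J : vec m -> vec n -> R)
  (Jy : vec m -> vec n -> vec m) (Ju : vec m -> vec n -> vec n) : Prop :=
  forall y u eps, 0 < eps -> exists del, 0 < del /\
    forall a b, vnorm a + vnorm b < del ->
      Rabs (J (vadd y a) (vadd u b) - J y u - dot (Jy y u) a - dot (Ju y u) b)
        <= eps * (vnorm a + vnorm b).

Definition continuous2 {m n p} (F : vec m -> vec n -> vec p) : Prop :=
  forall y u eps, 0 < eps -> exists del, 0 < del /\
    forall y' u', vnorm (vsub y' y) + vnorm (vsub u' u) < del ->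
      vnorm (vsub (F y' u') (F y u)) < eps.

Definition phi {m n} (Jy : vec m -> vec n -> vec m) (Ju : vec m -> vec n -> vec n)
  (S : vec n -> vec m) (Gs : vec n -> R -> mat m n -> Prop)
  (u : vec n) (D : R) (d : vec n) : R :=
  Rsup (fun s => exists G, Gs u D G /\
     s = dot (vadd (mvmul (mtr G) (Jy (S u) u)) (Ju (S u) u)) d).

Definition psi {m n} (Jy : vec m -> vec n -> vec m) (Ju : vec m -> vec n -> vec n)
  (S : vec n -> vec m) (Gs : vec n -> R -> mat m n -> Prop) (u : vec n) (D : R) : R :=
  - Rinf (fun s => exists h : vec n, vnorm h <= 1 /\ s = phi Jy Ju S Gs u D h).

Definition quad {n} (d : vec n) (H : mat n n) : R := dot d (mvmul H d).

(* The sequences (u_k, Delta_k, g_k, H_k, d_k, rho_k) are generated by Algorithm TR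
   (without stopping test; non-termination is stated separately). *)
Definition TR_run {m n} (J : vec m -> vec n -> R)
  (Jy : vec m -> vec n -> vec m) (Ju : vec m -> vec n -> vec n)
  (S : vec n -> vec m) (Gs : vec n -> R -> mat m n -> Prop)
  (Dmin eta1 eta2 beta1 beta2 mu : R)
  (u : nat -> vec n) (Del : nat -> R) (g : nat -> vec n) (H : nat -> mat n n)
  (d : nat -> vec n) (rho : nat -> R) : Prop :=
  let f := compf J S in
  Dmin < Del O /\
  forall k : nat,
    let q := fun dd => f (u k) + dot (g k) dd + / 2 * quad dd (H k) in
    let qt := fun dd => f (u k) + phi Jy Ju S Gs (u k) (Del k) dd + / 2 * quad dd (H k) in
    let psik := psi Jy Ju S Gs (u k) (Del k) in
    clarke_sub f (u k) (g k) /\ symmetric (H k) /\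
    (Dmin <= Del k ->
       vnorm (d k) <= Del k /\
       mu / 2 * vnorm (g k) * min_div (Del k) (vnorm (g k)) (mnorm (H k))
         <= f (u k) - q (d k) /\
       rho k = (f (u k) - f (vadd (u k) (d k))) / (f (u k) - q (d k))) /\
    (Del k < Dmin ->
       vnorm (d k) <= Del k /\
       mu / 2 * psik * min_div (Del k) psik (mnorm (H k)) <= f (u k) - qt (d k) /\
       rho k = (if Rlt_dec (vnorm (g k) * Del k) psik
                then (f (u k) - f (vadd (u k) (d k))) / (f (u k) - qt (d k))
                else 0)) /\
    (rho k <= eta1 -> u (k + 1)%nat = u k /\ Del (k + 1)%nat = beta1 * Del k) /\
    (eta1 < rho k <= eta2 ->
       u (k + 1)%nat = vadd (u k) (d k) /\ Del (k + 1)%nat = Rmax Dmin (Del k)) /\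
    (eta2 < rho k ->
       u (k + 1)%nat = vadd (u k) (d k) /\ Del (k + 1)%nat = Rmax Dmin (beta2 * Del k)).

(** If [ubar] were not C-stationary, the Clarke generalized directional derivative of [f]
    would be uniformly negative along some direction [h] near [ubar].  Near [ubar] this
    bounds the subgradients [g_k] away from [0] and, through (G2), bounds [psi] from below
    for small radii, while (G1) and (D) make the model [phi] an upper approximation of the
    increment of [f].  Hence small trust-region steps near [ubar] are successful, the radii
    stay bounded away from [0], and every successful step near [ubar] decreases [f] by a
    fixed amount.  Since [ubar] is visited infinitely often and [f(u_k)] is nonincreasing
    and bounded below by [f(ubar)], this is impossible. *)

From Pilot Require Import Defs.
From Stdlib Require Import Reals Lra Lia ClassicalEpsilon Classical FunctionalExtensionality.
Open Scope R_scope.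

Ltac vec_ext := apply functional_extensionality; intros; unfold vadd, vsub, vscal, vzero; ring.

Lemma Rabs_le_inv x a : Rabs x <= a -> - a <= x <= a.
Proof. intros Hx. pose proof (Rle_abs x). pose proof (Rle_abs (- x)). rewrite Rabs_Ropp in *. lra. Qed.

Lemma convex_comb_lt x y r t : 0 <= t <= 1 -> x < r -> y < r -> (1 - t) * x + t * y < r.
Proof.
  intros Ht Hx Hy. destruct (Req_dec t 1) as [->|Ht1]; [lra|].
  assert ((1 - t) * x < (1 - t) * r) by (apply Rmult_lt_compat_l; lra).
  assert (t * y <= t * r) by (apply Rmult_le_compat_l; lra). lra.
Qed.

Lemma inv_succ_eventually_lt e : 0 < e -> exists N, forall k, (N <= k)%nat -> / (INR k + 1) < e.
Proof.
  intros He. destruct (INR_unbounded (/ e)) as [N HN]. exists N. intros k Hk.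
  apply le_INR in Hk. pose proof (pos_INR N). pose proof (Rinv_0_lt_compat e He).
  replace e with (/ / e) by (field; lra). apply Rinv_lt_contravar; nra.
Qed.

(** * Euclidean geometry of [vec n] *)

Lemma sumfin_ext n (f g : Fin.t n -> R) : (forall i, f i = g i) -> sumfin n f = sumfin n g.
Proof.
  induction n; simpl; intros Hfg; [reflexivity|].
  rewrite Hfg, (IHn (fun i => f (Fin.FS i)) (fun i => g (Fin.FS i))); auto.
Qed.

Lemma sumfin_add n (f g : Fin.t n -> R) : sumfin n (fun i => f i + g i) = sumfin n f + sumfin n g.
Proof. induction n; simpl; [lra|]. rewrite (IHn (fun i => f (Fin.FS i)) (fun i => g (Fin.FS i))). lra. Qed.

Lemma sumfin_scal n a (f : Fin.t n -> R) : sumfin n (fun i => a * f i) = a * sumfin n f.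
Proof. induction n; simpl; [lra|]. rewrite (IHn (fun i => f (Fin.FS i))). lra. Qed.

Lemma sumfin_sub n (f g : Fin.t n -> R) : sumfin n (fun i => f i - g i) = sumfin n f - sumfin n g.
Proof. induction n; simpl; [lra|]. rewrite (IHn (fun i => f (Fin.FS i)) (fun i => g (Fin.FS i))). lra. Qed.

Lemma sumfin_zero n : sumfin n (fun _ => 0) = 0.
Proof. induction n; simpl; [lra|]. rewrite IHn; lra. Qed.

Lemma sumfin_le n (f g : Fin.t n -> R) : (forall i, f i <= g i) -> sumfin n f <= sumfin n g.
Proof.
  induction n; simpl; intros Hfg; [lra|].
  pose proof (Hfg Fin.F1).
  pose proof (IHn (fun i => f (Fin.FS i)) (fun i => g (Fin.FS i)) (fun i => Hfg _)). lra.
Qed.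

Lemma sumfin_abs n (f : Fin.t n -> R) : Rabs (sumfin n f) <= sumfin n (fun i => Rabs (f i)).
Proof.
  induction n; simpl; [rewrite Rabs_R0; lra|].
  eapply Rle_trans; [apply Rabs_triang|]. specialize (IHn (fun i => f (Fin.FS i))). lra.
Qed.

Lemma sumfin_swap n p (f : Fin.t n -> Fin.t p -> R) :
  sumfin n (fun i => sumfin p (fun j => f i j)) = sumfin p (fun j => sumfin n (fun i => f i j)).
Proof.
  induction n; simpl.
  - rewrite sumfin_zero; auto.
  - rewrite (IHn (fun i j => f (Fin.FS i) j)), <- sumfin_add. reflexivity.
Qed.

Lemma sumfin_nonneg n (f : Fin.t n -> R) : (forall i, 0 <= f i) -> 0 <= sumfin n f.
Proof. intros Hf. rewrite <- (sumfin_zero n). apply sumfin_le; auto. Qed.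

Lemma sumfin_term_le n (f : Fin.t n -> R) i : (forall j, 0 <= f j) -> f i <= sumfin n f.
Proof.
  induction n; intros Hf; [inversion i|].
  revert f Hf. pattern i. apply Fin.caseS'; intros; simpl.
  - pose proof (sumfin_nonneg n (fun i => f (Fin.FS i)) (fun j => Hf _)). lra.
  - pose proof (Hf Fin.F1). pose proof (IHn (fun i => f (Fin.FS i)) p (fun j => Hf _)). lra.
Qed.

Lemma dot_comm n (x y : vec n) : dot x y = dot y x.
Proof. unfold dot. apply sumfin_ext; intros; ring. Qed.

Lemma dot_addl n (x y z : vec n) : dot (vadd x y) z = dot x z + dot y z.
Proof. unfold dot, vadd. rewrite <- sumfin_add. apply sumfin_ext; intros; ring. Qed.

Lemma dot_addr n (x y z : vec n) : dot z (vadd x y) = dot z x + dot z y.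
Proof. rewrite !(dot_comm _ z). apply dot_addl. Qed.

Lemma dot_scall n a (x y : vec n) : dot (vscal a x) y = a * dot x y.
Proof. unfold dot, vscal. rewrite <- sumfin_scal. apply sumfin_ext; intros; ring. Qed.

Lemma dot_scalr n a (x y : vec n) : dot y (vscal a x) = a * dot y x.
Proof. rewrite !(dot_comm _ y). apply dot_scall. Qed.

Lemma dot_subl n (x y z : vec n) : dot (vsub x y) z = dot x z - dot y z.
Proof. unfold dot, vsub. rewrite <- sumfin_sub. apply sumfin_ext; intros; ring. Qed.

Lemma dot_subr n (x y z : vec n) : dot z (vsub x y) = dot z x - dot z y.
Proof. rewrite !(dot_comm _ z). apply dot_subl. Qed.

Lemma dot_zerol n (x : vec n) : dot vzero x = 0.
Proof. rewrite <- (sumfin_zero n). unfold dot, vzero. apply sumfin_ext; intros; ring. Qed.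

Lemma dot_self_nonneg n (x : vec n) : 0 <= dot x x.
Proof. apply sumfin_nonneg; intros; nra. Qed.

Lemma dot_sq_le n (x y : vec n) : (dot x y)^2 <= dot x x * dot y y.
Proof.
  assert (Hq : forall t, 0 <= dot x x - 2 * t * dot x y + t^2 * dot y y).
  { intros t. pose proof (dot_self_nonneg n (vsub x (vscal t y))) as Ht.
    rewrite dot_subl, !dot_subr, !dot_scall, !dot_scalr, (dot_comm _ y x) in Ht. nra. }
  pose proof (dot_self_nonneg n x). pose proof (dot_self_nonneg n y).
  destruct (Req_dec (dot y y) 0) as [E|E].
  - rewrite E. destruct (Req_dec (dot x y) 0) as [E2|E2]; [rewrite E2; lra|].
    specialize (Hq ((dot x x + 1) / (2 * dot x y))). rewrite E in Hq.
    replace (2 * ((dot x x + 1) / (2 * dot x y)) * dot x y) with (dot x x + 1) in Hq by (field; auto).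
    lra.
  - specialize (Hq (dot x y / dot y y)).
    replace (dot x x - 2 * (dot x y / dot y y) * dot x y + (dot x y / dot y y) ^ 2 * dot y y)
      with ((dot x x * dot y y - (dot x y)^2) / dot y y) in Hq by (field; lra).
    assert (0 <= dot x x * dot y y - (dot x y)^2); [|lra].
    apply Rmult_le_reg_r with (/ dot y y); [apply Rinv_0_lt_compat; lra|]. lra.
Qed.

Lemma vnorm_nonneg n (x : vec n) : 0 <= vnorm x.
Proof. apply sqrt_pos. Qed.

Lemma vnorm_sq n (x : vec n) : vnorm x * vnorm x = dot x x.
Proof. apply sqrt_sqrt, dot_self_nonneg. Qed.

Lemma dot_abs_le n (x y : vec n) : Rabs (dot x y) <= vnorm x * vnorm y.
Proof.
  pose proof (dot_sq_le n x y). pose proof (vnorm_sq n x). pose proof (vnorm_sq n y).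
  pose proof (vnorm_nonneg n x). pose proof (vnorm_nonneg n y).
  apply Rsqr_incr_0_var; [|nra]. unfold Rsqr. rewrite <- Rabs_mult, Rabs_pos_eq; nra.
Qed.

Lemma dot_le n (x y : vec n) : dot x y <= vnorm x * vnorm y.
Proof. pose proof (dot_abs_le n x y). pose proof (Rle_abs (dot x y)). lra. Qed.

Lemma dot_ge n (x y : vec n) : - (vnorm x * vnorm y) <= dot x y.
Proof. pose proof (dot_abs_le n x y). pose proof (Rle_abs (- dot x y)). rewrite Rabs_Ropp in *. lra. Qed.

Lemma vnorm_le_of_sq n (x : vec n) c : 0 <= c -> dot x x <= c * c -> vnorm x <= c.
Proof. intros. pose proof (vnorm_sq n x). pose proof (vnorm_nonneg n x). nra. Qed.

Lemma vnorm_triang n (x y : vec n) : vnorm (vadd x y) <= vnorm x + vnorm y.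
Proof.
  apply vnorm_le_of_sq; [pose proof (vnorm_nonneg n x); pose proof (vnorm_nonneg n y); lra|].
  rewrite dot_addl, !dot_addr, (dot_comm _ y x), <- (vnorm_sq n x), <- (vnorm_sq n y).
  pose proof (dot_le n x y). nra.
Qed.

Lemma vnorm_scal n a (x : vec n) : vnorm (vscal a x) = Rabs a * vnorm x.
Proof.
  unfold vnorm. rewrite dot_scall, dot_scalr, <- Rmult_assoc, sqrt_mult_alt by nra.
  f_equal. rewrite <- sqrt_Rsqr_abs. reflexivity.
Qed.

Lemma vnorm_zero n : vnorm (@vzero n) = 0.
Proof. unfold vnorm. rewrite dot_zerol. apply sqrt_0. Qed.

Lemma vnorm_opp n (x : vec n) : vnorm (vscal (-1) x) = vnorm x.
Proof. rewrite vnorm_scal, Rabs_left by lra. ring. Qed.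

Lemma vsub_vadd_opp n (x y : vec n) : vsub x y = vadd x (vscal (-1) y).
Proof. vec_ext. Qed.

Lemma vnorm_sub_triang n (x y : vec n) : vnorm (vsub x y) <= vnorm x + vnorm y.
Proof. rewrite vsub_vadd_opp, <- (vnorm_opp n y). apply vnorm_triang. Qed.

Lemma vnorm_sub_sym n (x y : vec n) : vnorm (vsub x y) = vnorm (vsub y x).
Proof. replace (vsub y x) with (vscal (-1) (vsub x y)) by vec_ext. now rewrite vnorm_opp. Qed.

Lemma vnorm_dist_triang n (x y z : vec n) : vnorm (vsub x z) <= vnorm (vsub x y) + vnorm (vsub y z).
Proof. replace (vsub x z) with (vadd (vsub x y) (vsub y z)) by vec_ext. apply vnorm_triang. Qed.

Lemma vnorm_sub_self n (x : vec n) : vnorm (vsub x x) = 0.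
Proof. replace (vsub x x) with (@vzero n) by vec_ext. apply vnorm_zero. Qed.

Lemma vnorm_coord_le n (x : vec n) i : Rabs (x i) <= vnorm x.
Proof.
  apply Rsqr_incr_0_var; [|apply vnorm_nonneg]. unfold Rsqr.
  rewrite vnorm_sq, <- Rabs_mult, Rabs_pos_eq by nra.
  apply (sumfin_term_le n (fun i => x i * x i)). intros; nra.
Qed.

Lemma vnorm_le_sum_abs n (x : vec n) : vnorm x <= sumfin n (fun i => Rabs (x i)).
Proof.
  apply vnorm_le_of_sq; [apply sumfin_nonneg; intros; apply Rabs_pos|].
  unfold dot. induction n; simpl; [lra|].
  specialize (IHn (fun i => x (Fin.FS i))). simpl in IHn.
  pose proof (sumfin_nonneg n (fun i => Rabs (x (Fin.FS i))) (fun _ => Rabs_pos _)).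
  pose proof (Rabs_pos (x Fin.F1)).
  assert (x Fin.F1 * x Fin.F1 = Rabs (x Fin.F1) * Rabs (x Fin.F1)) by (rewrite <- Rabs_mult, Rabs_pos_eq; nra).
  nra.
Qed.

Lemma vnorm_eq0 n (h : vec n) : vnorm h = 0 -> h = vzero.
Proof.
  intros Hh. apply functional_extensionality; intros i. unfold vzero.
  pose proof (vnorm_coord_le n h i). rewrite Hh in *.
  destruct (Req_dec (h i) 0) as [|Hne]; auto. pose proof (Rabs_pos_lt _ Hne). lra.
Qed.

Lemma vnorm_segment n (y a z : vec n) t : 0 <= t <= 1 ->
  vnorm (vsub (vadd y (vscal t a)) z) <= (1 - t) * vnorm (vsub y z) + t * vnorm (vsub (vadd y a) z).
Proof.
  intros Ht.
  replace (vsub (vadd y (vscal t a)) z)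
    with (vadd (vscal (1 - t) (vsub y z)) (vscal t (vsub (vadd y a) z))) by vec_ext.
  eapply Rle_trans; [apply vnorm_triang|]. rewrite !vnorm_scal, !Rabs_pos_eq by lra. lra.
Qed.

(** * Suprema and operator norms *)

Lemma Rsup_is_lub (E : R -> Prop) :
  (exists x, E x) -> (exists c, forall x, E x -> x <= c) -> is_lub E (Rsup E).
Proof.
  intros [x Hx] [c Hc]. unfold Rsup. apply epsilon_spec.
  destruct (completeness E) as [s Hs]; [exists c; intros y Hy; auto|exists x; auto|].
  exists s; auto.
Qed.

Lemma Rsup_ub (E : R -> Prop) :
  (exists x, E x) -> (exists c, forall x, E x -> x <= c) -> forall x, E x -> x <= Rsup E.
Proof. intros Hne Hc x Hx. apply (Rsup_is_lub E Hne Hc); auto. Qed.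

Lemma Rsup_le (E : R -> Prop) c : (exists x, E x) -> (forall x, E x -> x <= c) -> Rsup E <= c.
Proof. intros Hne Hc. apply (Rsup_is_lub E Hne (ex_intro _ c Hc)). intros y Hy; auto. Qed.

Lemma Rinf_lb (E : R -> Prop) c :
  (exists x, E x) -> (forall x, E x -> c <= x) -> forall x, E x -> Rinf E <= x.
Proof.
  intros [x0 Hx0] Hc x Hx. unfold Rinf.
  enough (- x <= Rsup (fun y => E (- y))) by lra.
  apply Rsup_ub.
  - exists (- x0). now rewrite Ropp_involutive.
  - exists (- c). intros y Hy. specialize (Hc _ Hy). lra.
  - now rewrite Ropp_involutive.
Qed.

Lemma mvmul_scal m n (A : mat m n) a h : mvmul A (vscal a h) = vscal a (mvmul A h).
Proof.
  apply functional_extensionality; intros i. unfold mvmul, vscal.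
  rewrite <- sumfin_scal. apply sumfin_ext; intros; ring.
Qed.

Lemma mvmul_msub m n (A B : mat m n) h : mvmul (msub A B) h = vsub (mvmul A h) (mvmul B h).
Proof.
  apply functional_extensionality; intros i. unfold mvmul, vsub, msub.
  rewrite <- sumfin_sub. apply sumfin_ext; intros; ring.
Qed.

Lemma mvmul_zero m n (A : mat m n) : mvmul A vzero = vzero.
Proof.
  apply functional_extensionality; intros i. unfold mvmul, vzero.
  transitivity (sumfin n (fun _ => 0)); [apply sumfin_ext; intros; ring|apply sumfin_zero].
Qed.

Lemma dot_mtr m n (G : mat m n) a d : dot (mvmul (mtr G) a) d = dot a (mvmul G d).
Proof.
  unfold dot, mvmul, mtr.
  transitivity (sumfin n (fun i => sumfin m (fun j => G j i * a j * d i))).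
  - apply sumfin_ext; intros. rewrite Rmult_comm, <- sumfin_scal. apply sumfin_ext; intros; ring.
  - rewrite sumfin_swap. apply sumfin_ext; intros. rewrite <- sumfin_scal. apply sumfin_ext; intros; ring.
Qed.

Lemma mvmul_bounded m n (A : mat m n) : exists C, forall h, vnorm (mvmul A h) <= C * vnorm h.
Proof.
  exists (sumfin m (fun i => sumfin n (fun j => Rabs (A i j)))). intros h.
  eapply Rle_trans; [apply vnorm_le_sum_abs|]. rewrite Rmult_comm, <- sumfin_scal.
  apply sumfin_le; intros i. unfold mvmul.
  eapply Rle_trans; [apply sumfin_abs|]. rewrite <- sumfin_scal. apply sumfin_le; intros j.
  rewrite Rabs_mult. pose proof (vnorm_coord_le n h j). pose proof (Rabs_pos (A i j)). nra.
Qed.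

Section OperatorNorm.
Variables (m n : nat) (A : mat m n).

Let image_of_ball : R -> Prop := fun s => exists h : vec n, vnorm h <= 1 /\ s = vnorm (mvmul A h).

Let image_of_ball_nonempty : exists s, image_of_ball s.
Proof. exists (vnorm (mvmul A vzero)), vzero. rewrite vnorm_zero. split; auto; lra. Qed.

Let image_of_ball_bounded : exists c, forall s, image_of_ball s -> s <= c.
Proof.
  destruct (mvmul_bounded m n A) as [C HC]. exists (Rabs C).
  intros s [h [Hh ->]]. specialize (HC h). pose proof (Rle_abs C). pose proof (Rabs_pos C).
  pose proof (vnorm_nonneg n h). nra.
Qed.

Lemma mnorm_nonneg : 0 <= mnorm A.
Proof.
  apply Rle_trans with (vnorm (mvmul A vzero)); [apply vnorm_nonneg|].
  apply (Rsup_ub _ image_of_ball_nonempty image_of_ball_bounded).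
  exists vzero. rewrite vnorm_zero. split; auto; lra.
Qed.

Lemma mnorm_spec h : vnorm (mvmul A h) <= mnorm A * vnorm h.
Proof.
  destruct (Req_dec (vnorm h) 0) as [E|E].
  - apply vnorm_eq0 in E. subst h. rewrite mvmul_zero, !vnorm_zero. lra.
  - pose proof (vnorm_nonneg n h). assert (Hp : 0 < / vnorm h) by (apply Rinv_0_lt_compat; lra).
    assert (Hunit : vnorm (mvmul A (vscal (/ vnorm h) h)) <= mnorm A).
    { apply (Rsup_ub _ image_of_ball_nonempty image_of_ball_bounded).
      exists (vscal (/ vnorm h) h). split; auto.
      rewrite vnorm_scal, Rabs_pos_eq, Rinv_l; lra. }
    rewrite mvmul_scal, vnorm_scal, Rabs_pos_eq in Hunit by lra.
    apply Rmult_le_compat_l with (r := vnorm h) in Hunit; [|lra].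
    rewrite <- Rmult_assoc, Rinv_r in Hunit; lra.
Qed.

Lemma mnorm_le c : (forall h, vnorm h <= 1 -> vnorm (mvmul A h) <= c) -> mnorm A <= c.
Proof. intros Hc. apply Rsup_le; [apply image_of_ball_nonempty|]. intros s [h [Hh ->]]. auto. Qed.

End OperatorNorm.

Lemma quad_bound n (d : vec n) (H : mat n n) : Rabs (quad d H) <= mnorm H * (vnorm d * vnorm d).
Proof.
  unfold quad. eapply Rle_trans; [apply dot_abs_le|].
  pose proof (mnorm_spec n n H d). pose proof (vnorm_nonneg n d). nra.
Qed.

Lemma min_div_pos D a b : 0 < D -> 0 < a -> 0 <= b -> 0 < min_div D a b.
Proof.
  intros. unfold min_div. destruct (Req_EM_T b 0); auto.
  apply Rmin_glb_lt; auto. apply Rdiv_lt_0_compat; lra.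
Qed.

Lemma min_div_ge D a b D0 a0 C : 0 < D0 <= D -> 0 < a0 <= a -> 0 <= b <= C ->
  Rmin D0 (a0 / C) <= min_div D a b.
Proof.
  intros HD Ha Hb. unfold min_div. pose proof (Rmin_l D0 (a0 / C)). pose proof (Rmin_r D0 (a0 / C)).
  destruct (Req_EM_T b 0); [lra|].
  apply Rmin_glb; [lra|]. eapply Rle_trans; [eassumption|]. unfold Rdiv.
  apply Rmult_le_compat; try lra; [left; apply Rinv_0_lt_compat; lra|].
  apply Rinv_le_contravar; lra.
Qed.

(** * A mean value inequality for right Dini derivatives *)

Definition continuous_on01 (phi : R -> R) : Prop :=
  forall t, 0 <= t <= 1 -> forall eps, 0 < eps -> exists del, 0 < del /\
    forall s, 0 <= s <= 1 -> Rabs (s - t) < del -> Rabs (phi s - phi t) < eps.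

Lemma continuous_on01_of_pointwise_lipschitz (phi : R -> R) :
  (forall t, 0 <= t <= 1 -> exists c del, 0 < del /\
     forall s, 0 <= s <= 1 -> Rabs (s - t) < del -> Rabs (phi s - phi t) <= c * Rabs (s - t)) ->
  continuous_on01 phi.
Proof.
  intros Hlip t Ht eps Heps. destruct (Hlip t Ht) as (c & del & Hdel & Hc).
  pose proof (Rabs_pos c) as Hc0. pose proof (Rle_abs c).
  assert (Hq : 0 < eps / (Rabs c + 1)) by (apply Rdiv_lt_0_compat; lra).
  exists (Rmin del (eps / (Rabs c + 1))). split; [apply Rmin_glb_lt; lra|].
  intros s Hs Hst. pose proof (Rmin_l del (eps / (Rabs c + 1))). pose proof (Rmin_r del (eps / (Rabs c + 1))).
  pose proof (Rabs_pos (s - t)).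
  assert ((Rabs c + 1) * Rabs (s - t) < eps).
  { apply Rmult_lt_reg_r with (/ (Rabs c + 1)); [apply Rinv_0_lt_compat; lra|].
    replace ((Rabs c + 1) * Rabs (s - t) * / (Rabs c + 1)) with (Rabs (s - t)) by (field; lra).
    unfold Rdiv in *. lra. }
  specialize (Hc s Hs ltac:(lra)). nra.
Qed.

Lemma le_at_left_limit (phi : R -> R) K T : 0 < T <= 1 -> continuous_on01 phi ->
  (forall s, 0 <= s < T -> phi s - phi 0 <= K * s) -> phi T - phi 0 <= K * T.
Proof.
  intros HT Hc Hbelow. apply Rle_plus_epsilon. intros e He.
  destruct (Hc T ltac:(lra) (e / 2) ltac:(lra)) as (del & Hdel & Hcont).
  pose proof (Rabs_pos K) as HK.
  set (r := Rmin T (Rmin (del / 2) (e / (2 * (Rabs K + 1))))).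
  assert (Hr : 0 < r) by (repeat apply Rmin_glb_lt; try apply Rdiv_lt_0_compat; lra).
  assert (HrT : r <= T) by apply Rmin_l.
  assert (Hrdel : r <= del / 2) by (eapply Rle_trans; [apply Rmin_r|apply Rmin_l]).
  assert (Hre : r <= e / (2 * (Rabs K + 1))) by (eapply Rle_trans; [apply Rmin_r|apply Rmin_r]).
  specialize (Hbelow (T - r) ltac:(lra)).
  specialize (Hcont (T - r) ltac:(lra)).
  replace (T - r - T) with (- r) in Hcont by ring.
  rewrite Rabs_Ropp, (Rabs_pos_eq r) in Hcont by lra. specialize (Hcont ltac:(lra)).
  assert (HKr : - K * r <= e / 2).
  { apply Rle_trans with ((Rabs K + 1) * (e / (2 * (Rabs K + 1)))).
    - assert (- K <= Rabs K + 1) by (pose proof (Rle_abs (- K)); rewrite Rabs_Ropp in *; lra).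
      apply Rle_trans with ((Rabs K + 1) * r); [apply Rmult_le_compat_r|apply Rmult_le_compat_l]; lra.
    - right; field; lra. }
  apply Rabs_def2 in Hcont. nra.
Qed.

(** [T] is the supremum of the times up to which the bound holds: continuity keeps the
    bound at [T], and the right increment condition pushes it past [T] unless [T = 1]. *)
Lemma mean_value_of_right_increments (phi : R -> R) (K : R) :
  continuous_on01 phi ->
  (forall t, 0 <= t < 1 -> exists del, 0 < del /\ forall s, 0 < s < del -> phi (t + s) - phi t <= K * s) ->
  phi 1 - phi 0 <= K.
Proof.
  intros Hc Hd.
  set (E := fun t => 0 <= t <= 1 /\ forall s, 0 <= s <= t -> phi s - phi 0 <= K * s).
  assert (HE0 : E 0) by (split; [lra|intros s Hs; replace s with 0 by lra; lra]).
  destruct (completeness E) as [T [HTub HTlub]]; [exists 1; intros t [Ht _]; lra|exists 0; auto|].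
  assert (T0 : 0 <= T) by (apply HTub; auto).
  assert (T1 : T <= 1) by (apply HTlub; intros t [Ht _]; lra).
  assert (Hbelow : forall s, 0 <= s < T -> phi s - phi 0 <= K * s).
  { intros s Hs. apply NNPP; intros Hns.
    assert (T <= s); [|lra].
    apply HTlub. intros t [_ Ht]. apply Rnot_lt_le. intros Hst. apply Hns, Ht. lra. }
  assert (HT : phi T - phi 0 <= K * T)
    by (destruct (Req_dec T 0) as [->|HT0]; [lra|apply le_at_left_limit; auto; lra]).
  assert (T = 1); [|subst T; lra].
  apply NNPP; intros HT1.
  destruct (Hd T ltac:(lra)) as (del & Hdel & Hstep).
  set (s' := Rmin (del / 2) (1 - T)).
  assert (Hs'0 : 0 < s') by (apply Rmin_glb_lt; lra).
  assert (Hs'1 : s' <= del / 2) by apply Rmin_l.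
  assert (Hs'2 : s' <= 1 - T) by apply Rmin_r.
  assert (HE : E (T + s')); [|specialize (HTub _ HE); lra].
  split; [lra|]. intros s Hs.
  destruct (Rlt_le_dec s T); [apply Hbelow; lra|].
  destruct (Req_dec s T) as [->|]; auto.
  specialize (Hstep (s - T) ltac:(lra)). replace (T + (s - T)) with s in Hstep by ring. nra.
Qed.

Lemma dini_mean_value (phi : R -> R) (M : R) :
  continuous_on01 phi ->
  (forall t, 0 <= t < 1 -> forall e, 0 < e -> exists del, 0 < del /\
      forall s, 0 < s < del -> phi (t + s) - phi t <= (M + e) * s) ->
  phi 1 - phi 0 <= M.
Proof.
  intros Hc Hd. apply Rle_plus_epsilon. intros e He.
  apply mean_value_of_right_increments; auto.
Qed.

(** * Mean value inequalities for [J] and [S] *)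

Section JCalculus.
Variables (m n : nat) (J : vec m -> vec n -> R)
  (Jy : vec m -> vec n -> vec m) (Ju : vec m -> vec n -> vec n).
Hypothesis HJ : has_gradients J Jy Ju.

Lemma J_along_line y u a b eps : 0 < eps -> exists del, 0 < del /\ forall s, Rabs s < del ->
   Rabs (J (vadd y (vscal s a)) (vadd u (vscal s b)) - J y u - s * (dot (Jy y u) a + dot (Ju y u) b))
     <= eps * Rabs s.
Proof.
  intros Heps. set (k := vnorm a + vnorm b + 1).
  assert (Hk : 0 < k) by (unfold k; pose proof (vnorm_nonneg m a); pose proof (vnorm_nonneg n b); lra).
  destruct (HJ y u (eps / k)) as (del & Hdel & Hlin); [apply Rdiv_lt_0_compat; lra|].
  exists (del / k). split; [apply Rdiv_lt_0_compat; lra|]. intros s Hs.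
  assert (Hn : vnorm (vscal s a) + vnorm (vscal s b) = Rabs s * (vnorm a + vnorm b))
    by (rewrite !vnorm_scal; ring).
  pose proof (Rabs_pos s).
  assert (Hsk : Rabs s * k < del).
  { apply Rmult_lt_reg_r with (/ k); [apply Rinv_0_lt_compat; auto|].
    rewrite Rmult_assoc, Rinv_r by lra. lra. }
  specialize (Hlin _ _ ltac:(rewrite Hn; unfold k in *; nra)).
  rewrite !dot_scalr, Hn in Hlin.
  replace (J (vadd y (vscal s a)) (vadd u (vscal s b)) - J y u - s * (dot (Jy y u) a + dot (Ju y u) b))
    with (J (vadd y (vscal s a)) (vadd u (vscal s b)) - J y u - s * dot (Jy y u) a - s * dot (Ju y u) b)
    by ring.
  eapply Rle_trans; [apply Hlin|].
  replace (eps / k * (Rabs s * (vnorm a + vnorm b))) with (eps * Rabs s * ((vnorm a + vnorm b) / k))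
    by (field; lra).
  assert ((vnorm a + vnorm b) / k <= 1).
  { apply Rmult_le_reg_r with k; auto. unfold Rdiv. rewrite Rmult_assoc, Rinv_l by lra. unfold k; lra. }
  pose proof (Rmult_le_pos _ _ (Rlt_le _ _ Heps) H). nra.
Qed.

Lemma J_mean_value y u a b M :
  (forall t, 0 <= t <= 1 -> dot (Jy (vadd y (vscal t a)) (vadd u (vscal t b))) a
                          + dot (Ju (vadd y (vscal t a)) (vadd u (vscal t b))) b <= M) ->
  J (vadd y a) (vadd u b) - J y u <= M.
Proof.
  intros HM. set (p := fun t => J (vadd y (vscal t a)) (vadd u (vscal t b))).
  replace (J (vadd y a) (vadd u b)) with (p 1) by (unfold p; f_equal; vec_ext).
  replace (J y u) with (p 0) by (unfold p; f_equal; vec_ext).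
  assert (Hshift : forall t s,
    p (t + s) = J (vadd (vadd y (vscal t a)) (vscal s a)) (vadd (vadd u (vscal t b)) (vscal s b)))
    by (intros; unfold p; f_equal; vec_ext).
  apply dini_mean_value.
  - apply continuous_on01_of_pointwise_lipschitz. intros t Ht.
    set (D := dot (Jy (vadd y (vscal t a)) (vadd u (vscal t b))) a
            + dot (Ju (vadd y (vscal t a)) (vadd u (vscal t b))) b).
    destruct (J_along_line (vadd y (vscal t a)) (vadd u (vscal t b)) a b 1 ltac:(lra)) as (del & Hdel & Hline).
    exists (Rabs D + 1), del. split; auto. intros s Hs Hst.
    specialize (Hline (s - t) Hst). rewrite <- Hshift in Hline. replace (t + (s - t)) with s in Hline by ring.
    fold D in Hline. apply Rabs_le_inv in Hline.
    assert (HD : Rabs ((s - t) * D) <= Rabs D * Rabs (s - t)) by (rewrite Rabs_mult; lra).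
    apply Rabs_le_inv in HD. apply Rabs_le. unfold p in *. lra.
  - intros t Ht e He.
    destruct (J_along_line (vadd y (vscal t a)) (vadd u (vscal t b)) a b e He) as (del & Hdel & Hline).
    exists del. split; auto. intros s Hs.
    specialize (Hline s ltac:(rewrite Rabs_pos_eq; lra)). rewrite <- Hshift, (Rabs_pos_eq s) in Hline by lra.
    specialize (HM t ltac:(lra)). apply Rmult_le_compat_l with (r := s) in HM; [|lra].
    apply Rabs_le_inv in Hline. unfold p in *. lra.
Qed.

Lemma J_uniform_linearization (HJy : continuous2 Jy) (HJu : continuous2 Ju) y0 u0 eps :
  0 < eps -> exists del, 0 < del /\ forall y u a b,
    vnorm (vsub y y0) + vnorm (vsub u u0) < del ->
    vnorm (vsub (vadd y a) y0) + vnorm (vsub (vadd u b) u0) < del ->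
    Rabs (J (vadd y a) (vadd u b) - J y u - dot (Jy y0 u0) a - dot (Ju y0 u0) b) <= eps * (vnorm a + vnorm b).
Proof.
  intros Heps. destruct (HJy y0 u0 eps Heps) as (d1 & Hd1 & Hcy). destruct (HJu y0 u0 eps Heps) as (d2 & Hd2 & Hcu).
  exists (Rmin d1 d2). split; [apply Rmin_glb_lt; auto|].
  pose proof (Rmin_l d1 d2). pose proof (Rmin_r d1 d2).
  assert (Hup : forall y u a b, vnorm (vsub y y0) + vnorm (vsub u u0) < Rmin d1 d2 ->
    vnorm (vsub (vadd y a) y0) + vnorm (vsub (vadd u b) u0) < Rmin d1 d2 ->
    J (vadd y a) (vadd u b) - J y u <= dot (Jy y0 u0) a + dot (Ju y0 u0) b + eps * (vnorm a + vnorm b)).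
  { intros y u a b Hp Hq. apply J_mean_value. intros t Ht.
    pose proof (vnorm_segment m y a y0 t Ht). pose proof (vnorm_segment n u b u0 t Ht).
    set (yt := vadd y (vscal t a)) in *. set (ut := vadd u (vscal t b)) in *.
    assert (Hin : vnorm (vsub yt y0) + vnorm (vsub ut u0) < Rmin d1 d2).
    { pose proof (convex_comb_lt _ _ _ t Ht Hp Hq). lra. }
    specialize (Hcy yt ut ltac:(lra)). specialize (Hcu yt ut ltac:(lra)).
    pose proof (dot_le m (vsub (Jy yt ut) (Jy y0 u0)) a). pose proof (dot_le n (vsub (Ju yt ut) (Ju y0 u0)) b).
    rewrite dot_subl in *. pose proof (vnorm_nonneg m a). pose proof (vnorm_nonneg n b). nra. }
  intros y u a b Hp Hq. apply Rabs_le. split.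
  - specialize (Hup (vadd y a) (vadd u b) (vscal (-1) a) (vscal (-1) b) Hq).
    replace (vadd (vadd y a) (vscal (-1) a)) with y in Hup by vec_ext.
    replace (vadd (vadd u b) (vscal (-1) b)) with u in Hup by vec_ext.
    specialize (Hup Hp). rewrite !dot_scalr, !vnorm_opp in Hup. lra.
  - specialize (Hup y u a b Hp Hq). lra.
Qed.

End JCalculus.

Section SCalculus.
Variables (m n : nat) (S : vec n -> vec m).
Hypothesis HSlip : loc_lipschitz S.

Lemma S_local_lipschitz x0 : exists r L, 0 < r /\ 0 <= L /\
  forall x y, vnorm (vsub x x0) <= r -> vnorm (vsub y x0) <= r ->
    vnorm (vsub (S x) (S y)) <= L * vnorm (vsub x y).
Proof.
  destruct (HSlip x0) as (r & L & Hr & HL). exists r, (Rabs L). repeat split; auto; [apply Rabs_pos|].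
  intros x y Hx Hy. eapply Rle_trans; [apply HL; auto|].
  apply Rmult_le_compat_r; [apply vnorm_nonneg|apply Rle_abs].
Qed.

Lemma S_continuous x eps : 0 < eps ->
  exists del, 0 < del /\ forall y, vnorm (vsub y x) < del -> vnorm (vsub (S y) (S x)) < eps.
Proof.
  intros Heps. destruct (S_local_lipschitz x) as (r & L & Hr & HL & HS).
  assert (Hq : 0 < eps / (L + 1)) by (apply Rdiv_lt_0_compat; lra).
  exists (Rmin r (eps / (L + 1))). split; [apply Rmin_glb_lt; auto|].
  intros y Hy. pose proof (Rmin_l r (eps / (L + 1))). pose proof (Rmin_r r (eps / (L + 1))).
  specialize (HS y x ltac:(lra) ltac:(rewrite vnorm_sub_self; lra)).
  pose proof (vnorm_nonneg n (vsub y x)).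
  assert ((L + 1) * vnorm (vsub y x) < eps).
  { apply Rmult_lt_reg_r with (/ (L + 1)); [apply Rinv_0_lt_compat; lra|].
    replace ((L + 1) * vnorm (vsub y x) * / (L + 1)) with (vnorm (vsub y x)) by (field; lra).
    unfold Rdiv in *. lra. }
  nra.
Qed.

Lemma frechet_diff_norm_le x0 r L x A :
  (forall y z, vnorm (vsub y x0) <= r -> vnorm (vsub z x0) <= r -> vnorm (vsub (S y) (S z)) <= L * vnorm (vsub y z)) ->
  vnorm (vsub x x0) < r -> frechet_diff S x A -> forall h, vnorm (mvmul A h) <= L * vnorm h.
Proof.
  intros HL Hx HF h. apply Rle_plus_epsilon. intros e He. pose proof (vnorm_nonneg n h).
  destruct (HF (e / (vnorm h + 1))) as (del & Hdel & Hrem); [apply Rdiv_lt_0_compat; lra|].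
  set (s := Rmin del (r - vnorm (vsub x x0)) / (2 * (vnorm h + 1))).
  assert (Hm : 0 < Rmin del (r - vnorm (vsub x x0))) by (apply Rmin_glb_lt; lra).
  pose proof (Rmin_l del (r - vnorm (vsub x x0))). pose proof (Rmin_r del (r - vnorm (vsub x x0))).
  assert (Hs : 0 < s) by (apply Rdiv_lt_0_compat; lra).
  assert (Hsh : s * vnorm h < Rmin del (r - vnorm (vsub x x0))).
  { unfold s. apply Rmult_lt_reg_r with (2 * (vnorm h + 1)); [lra|].
    replace (Rmin del (r - vnorm (vsub x x0)) / (2 * (vnorm h + 1)) * vnorm h * (2 * (vnorm h + 1)))
      with (Rmin del (r - vnorm (vsub x x0)) * vnorm h) by (field; lra). nra. }
  specialize (Hrem (vscal s h)). rewrite vnorm_scal, Rabs_pos_eq, mvmul_scal in Hrem by lra.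
  specialize (Hrem ltac:(lra)).
  assert (Hin : vnorm (vsub (vadd x (vscal s h)) x0) <= r).
  { replace (vsub (vadd x (vscal s h)) x0) with (vadd (vsub x x0) (vscal s h)) by vec_ext.
    eapply Rle_trans; [apply vnorm_triang|]. rewrite vnorm_scal, Rabs_pos_eq by lra. lra. }
  specialize (HL _ x Hin ltac:(lra)).
  replace (vsub (vadd x (vscal s h)) x) with (vscal s h) in HL by vec_ext.
  rewrite vnorm_scal, Rabs_pos_eq in HL by lra.
  assert (HsA : vnorm (vscal s (mvmul A h)) <= s * (L * vnorm h) + s * (e / (vnorm h + 1) * vnorm h)).
  { replace (vscal s (mvmul A h)) with (vsub (vsub (S (vadd x (vscal s h))) (S x))
      (vsub (vsub (S (vadd x (vscal s h))) (S x)) (vscal s (mvmul A h)))) by vec_ext.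
    eapply Rle_trans; [apply vnorm_sub_triang|]. lra. }
  rewrite vnorm_scal, Rabs_pos_eq, <- Rmult_plus_distr_l in HsA by lra.
  apply Rmult_le_reg_l in HsA; [|lra].
  assert (e / (vnorm h + 1) * vnorm h <= e).
  { apply Rmult_le_reg_r with (vnorm h + 1); [lra|].
    replace (e / (vnorm h + 1) * vnorm h * (vnorm h + 1)) with (e * vnorm h) by (field; lra). nra. }
  lra.
Qed.

Lemma bouligand_mnorm_bounded x0 : exists L, forall W, bouligand S x0 W -> mnorm W <= L.
Proof.
  destruct (S_local_lipschitz x0) as (r & L & Hr & HL & HS). exists L.
  intros W (xj & Aj & Hx & HF & HA). apply mnorm_le. intros h Hh.
  enough (vnorm (mvmul W h) <= L * vnorm h) by (pose proof (vnorm_nonneg m (mvmul W h)); nra).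
  apply Rle_plus_epsilon. intros e He. pose proof (vnorm_nonneg n h).
  destruct (Hx r Hr) as [N1 HN1]. destruct (HA e He) as [N2 HN2].
  specialize (HN1 (Nat.max N1 N2) ltac:(lia)). specialize (HN2 (Nat.max N1 N2) ltac:(lia)).
  set (j := Nat.max N1 N2) in *.
  pose proof (frechet_diff_norm_le x0 r L (xj j) (Aj j) HS HN1 (HF j) h).
  pose proof (mnorm_spec m n (msub (Aj j) W) h) as Hdiff. rewrite mvmul_msub in Hdiff.
  replace (mvmul W h) with (vsub (mvmul (Aj j) h) (vsub (mvmul (Aj j) h) (mvmul W h))) by vec_ext.
  eapply Rle_trans; [apply vnorm_sub_triang|].
  assert (mnorm (msub (Aj j) W) * vnorm h <= e * 1) by (apply Rmult_le_compat; try lra; apply mnorm_nonneg).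
  lra.
Qed.

Lemma dir_deriv_increment x h v e : dir_deriv S x h v -> 0 < e -> exists tau, 0 < tau /\
  forall t, 0 < t < tau -> exists w, vnorm w <= e /\ vsub (S (vadd x (vscal t h))) (S x) = vscal t (vadd v w).
Proof.
  intros Hdir He. destruct (Hdir e He) as (tau & Htau & Hq). exists tau. split; auto. intros t Ht.
  exists (vsub (vscal (/ t) (vsub (S (vadd x (vscal t h))) (S x))) v). split; [apply Hq; auto|].
  apply functional_extensionality; intros; unfold vscal, vadd, vsub. field. lra.
Qed.

Hypothesis HD : forall u h, exists G, bouligand S u G /\ dir_deriv S u h (mvmul G h).

(** Condition (D) gives a right Dini derivative along every segment, so only the
    values of [a . W d] for Bouligand elements [W] along the segment matter. *)
Lemma S_mean_value u d a M :
  (forall t, 0 <= t <= 1 -> forall G, bouligand S (vadd u (vscal t d)) G -> dot a (mvmul G d) <= M) ->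
  dot a (S (vadd u d)) - dot a (S u) <= M.
Proof.
  intros HM. set (p := fun t => dot a (S (vadd u (vscal t d)))).
  replace (dot a (S (vadd u d))) with (p 1) by (unfold p; do 3 f_equal; vec_ext).
  replace (dot a (S u)) with (p 0) by (unfold p; do 3 f_equal; vec_ext).
  assert (Hshift : forall t s, vadd u (vscal (t + s) d) = vadd (vadd u (vscal t d)) (vscal s d)) by (intros; vec_ext).
  pose proof (vnorm_nonneg m a). pose proof (vnorm_nonneg n d).
  apply dini_mean_value.
  - apply continuous_on01_of_pointwise_lipschitz. intros t Ht.
    set (xt := vadd u (vscal t d)).
    destruct (S_local_lipschitz xt) as (r & L & Hr & HL & HS).
    exists (vnorm a * L * vnorm d), (r / (vnorm d + 1)). split; [apply Rdiv_lt_0_compat; lra|].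
    intros s Hs Hst. unfold p. fold xt. rewrite <- dot_subr.
    replace s with (t + (s - t)) at 1 by ring. rewrite Hshift. fold xt.
    assert (Hstep : vnorm (vscal (s - t) d) <= r).
    { rewrite vnorm_scal. pose proof (Rabs_pos (s - t)).
      apply Rle_trans with (Rabs (s - t) * (vnorm d + 1)); [nra|].
      apply Rmult_le_reg_r with (/ (vnorm d + 1)); [apply Rinv_0_lt_compat; lra|].
      replace (Rabs (s - t) * (vnorm d + 1) * / (vnorm d + 1)) with (Rabs (s - t)) by (field; lra).
      unfold Rdiv in Hst. lra. }
    specialize (HS (vadd xt (vscal (s - t) d)) xt).
    replace (vsub (vadd xt (vscal (s - t) d)) xt) with (vscal (s - t) d) in HS by vec_ext.
    specialize (HS Hstep ltac:(rewrite vnorm_sub_self; lra)). rewrite vnorm_scal in HS.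
    eapply Rle_trans; [apply dot_abs_le|]. apply Rmult_le_compat_l with (r := vnorm a) in HS; [|lra].
    lra.
  - intros t Ht e He. destruct (HD (vadd u (vscal t d)) d) as (G & HB & Hdir).
    specialize (HM t ltac:(lra) G HB).
    assert (He' : 0 < e / (vnorm a + 1)) by (apply Rdiv_lt_0_compat; lra).
    destruct (dir_deriv_increment _ d _ _ Hdir He') as (del & Hdel & Hinc).
    exists del. split; auto. intros s Hs. destruct (Hinc s Hs) as (w & Hw & Heq).
    unfold p. rewrite <- dot_subr, Hshift, Heq, dot_scalr, dot_addr.
    pose proof (dot_le m a w).
    assert (vnorm a * vnorm w <= e).
    { apply Rle_trans with (vnorm a * (e / (vnorm a + 1))); [apply Rmult_le_compat_l; lra|].
      replace (vnorm a * (e / (vnorm a + 1))) with (e - e / (vnorm a + 1)) by (field; lra). lra. }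
    nra.
Qed.

End SCalculus.

(** * Clarke subgradients near a non-stationary point *)

Lemma nonstationary_descent_direction n (f : vec n -> R) ub : ~ clarke_sub f ub vzero ->
  exists h eps del, 0 < vnorm h /\ 0 < eps /\ 0 < del /\
    forall y t, vnorm (vsub y ub) < del -> 0 < t < del -> (f (vadd y (vscal t h)) - f y) / t <= - eps.
Proof.
  intros Hn. unfold clarke_sub in Hn.
  apply not_all_ex_not in Hn as [h Hn]. apply not_all_ex_not in Hn as [eps Hn].
  apply not_all_ex_not in Hn as [del Hn].
  destruct (classic (0 < eps)) as [He|He]; [|exfalso; apply Hn; intros; contradiction].
  destruct (classic (0 < del)) as [Hd|Hd]; [|exfalso; apply Hn; intros; contradiction].
  assert (Hq : forall y t, vnorm (vsub y ub) < del -> 0 < t < del -> (f (vadd y (vscal t h)) - f y) / t <= - eps).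
  { intros y t Hy Ht. apply Rnot_lt_le. intros Hlt. apply Hn. intros _ _.
    exists y, t. rewrite dot_zerol. repeat split; auto; lra. }
  exists h, eps, del. repeat split; auto.
  pose proof (vnorm_nonneg n h). destruct (Req_dec (vnorm h) 0) as [E|E]; [|lra].
  apply vnorm_eq0 in E. subst h. specialize (Hq ub (del / 2)).
  replace (vadd ub (vscal (del / 2) vzero)) with ub in Hq by vec_ext.
  rewrite vnorm_sub_self, Rminus_diag, Rdiv_0_l in Hq. specialize (Hq Hd ltac:(lra)). lra.
Qed.

Lemma clarke_sub_norm_lower n (f : vec n -> R) ub h eps del :
  0 < vnorm h -> 0 < eps -> 0 < del ->
  (forall y t, vnorm (vsub y ub) < del -> 0 < t < del -> (f (vadd y (vscal t h)) - f y) / t <= - eps) ->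
  forall x g, vnorm (vsub x ub) < del / 2 -> clarke_sub f x g -> eps / 2 / vnorm h <= vnorm g.
Proof.
  intros Hh He Hd Hq x g Hx Hg.
  destruct (Hg h (eps / 2) (del / 2) ltac:(lra) ltac:(lra)) as (y & t & Hy & Ht & Hquot).
  pose proof (vnorm_dist_triang n y x ub).
  specialize (Hq y t ltac:(lra) ltac:(lra)). pose proof (dot_ge n g h).
  apply Rmult_le_reg_r with (vnorm h); [lra|].
  replace (eps / 2 / vnorm h * vnorm h) with (eps / 2) by (field; lra). nra.
Qed.

Lemma clarke_sub_norm_upper n (f : vec n -> R) x0 r K : 0 < r -> 0 <= K ->
  (forall y y', vnorm (vsub y x0) < r -> vnorm (vsub y' x0) < r -> Rabs (f y' - f y) <= K * vnorm (vsub y' y)) ->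
  forall x g, vnorm (vsub x x0) < r / 2 -> clarke_sub f x g -> vnorm g <= K + 1.
Proof.
  intros Hr HK HL x g Hx Hg. pose proof (vnorm_nonneg n g).
  set (del := r / 4 / (vnorm g + 1)).
  assert (Hdel : 0 < del) by (apply Rdiv_lt_0_compat; lra).
  destruct (Hg g 1 del ltac:(lra) Hdel) as (y & t & Hy & Ht & Hquot).
  assert (Htg : t * vnorm g < r / 4).
  { apply Rle_lt_trans with (del * vnorm g); [apply Rmult_le_compat_r; lra|].
    unfold del. apply Rmult_lt_reg_r with (vnorm g + 1); [lra|].
    replace (r / 4 / (vnorm g + 1) * vnorm g * (vnorm g + 1)) with (r / 4 * vnorm g) by (field; lra). nra. }
  assert (Hdel4 : del <= r / 4).
  { unfold del. apply Rmult_le_reg_r with (vnorm g + 1); [lra|].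
    unfold Rdiv. rewrite Rmult_assoc, Rinv_l by lra. nra. }
  pose proof (vnorm_dist_triang n y x x0).
  assert (Hy1 : vnorm (vsub (vadd y (vscal t g)) x0) < r).
  { replace (vsub (vadd y (vscal t g)) x0) with (vadd (vsub y x0) (vscal t g)) by vec_ext.
    eapply Rle_lt_trans; [apply vnorm_triang|]. rewrite vnorm_scal, Rabs_pos_eq by lra. lra. }
  specialize (HL y (vadd y (vscal t g)) ltac:(lra) Hy1).
  replace (vsub (vadd y (vscal t g)) y) with (vscal t g) in HL by vec_ext.
  rewrite vnorm_scal, (Rabs_pos_eq t) in HL by lra.
  assert (Hq2 : dot g g - 1 < K * vnorm g).
  { apply Rlt_le_trans with ((f (vadd y (vscal t g)) - f y) / t); auto.
    apply Rmult_le_reg_r with t; [lra|]. unfold Rdiv. rewrite Rmult_assoc, Rinv_l by lra.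
    pose proof (Rle_abs (f (vadd y (vscal t g)) - f y)). nra. }
  rewrite <- vnorm_sq in Hq2. nra.
Qed.

(** * The model and the composite function [f = J(S(.), .)] *)

Definition model_grad {m n} (Jy : vec m -> vec n -> vec m) (Ju : vec m -> vec n -> vec n)
  (S : vec n -> vec m) (u : vec n) (G : mat m n) : vec n :=
  vadd (mvmul (mtr G) (Jy (S u) u)) (Ju (S u) u).

Lemma model_grad_dot m n Jy Ju (S : vec n -> vec m) u G d :
  dot (model_grad Jy Ju S u G) d = dot (Jy (S u) u) (mvmul G d) + dot (Ju (S u) u) d.
Proof. unfold model_grad. rewrite dot_addl, dot_mtr. reflexivity. Qed.

Section ModelFunction.
Variables (m n : nat) (Jy : vec m -> vec n -> vec m) (Ju : vec m -> vec n -> vec n)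
  (S : vec n -> vec m) (Gs : vec n -> R -> mat m n -> Prop).
Hypothesis HGs : forall u D, 0 < D ->
  (exists G, Gs u D G) /\ (exists c, forall G, Gs u D G -> mnorm G <= c).

Local Notation phi := (phi Jy Ju S Gs).
Local Notation psi := (psi Jy Ju S Gs).
Local Notation slope u G d := (dot (model_grad Jy Ju S u G) d).

Lemma model_slope_bounded u D : 0 < D -> exists B, 0 <= B /\
  forall G d, Gs u D G -> Rabs (slope u G d) <= B * vnorm d.
Proof.
  intros HD. destruct (HGs u D HD) as [_ [c Hc]].
  pose proof (vnorm_nonneg m (Jy (S u) u)). pose proof (Rabs_pos c).
  exists (vnorm (Jy (S u) u) * Rabs c + vnorm (Ju (S u) u)).
  split; [pose proof (vnorm_nonneg n (Ju (S u) u)); nra|]. intros G d HG.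
  rewrite model_grad_dot. eapply Rle_trans; [apply Rabs_triang|].
  pose proof (dot_abs_le m (Jy (S u) u) (mvmul G d)). pose proof (dot_abs_le n (Ju (S u) u) d).
  pose proof (mnorm_spec m n G d). pose proof (Hc G HG). pose proof (Rle_abs c).
  pose proof (vnorm_nonneg n d). pose proof (mnorm_nonneg m n G).
  assert (vnorm (Jy (S u) u) * vnorm (mvmul G d) <= vnorm (Jy (S u) u) * (Rabs c * vnorm d)).
  { apply Rmult_le_compat_l; auto. eapply Rle_trans; eauto. apply Rmult_le_compat_r; lra. }
  nra.
Qed.

Lemma phi_ge_slope u D d G : 0 < D -> Gs u D G -> slope u G d <= phi u D d.
Proof.
  intros HD HG. destruct (model_slope_bounded u D HD) as (B & HB & Hslope).
  apply Rsup_ub; [exists (slope u G d), G; auto| |exists G; auto].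
  exists (B * vnorm d). intros s [G' [HG' ->]].
  pose proof (Hslope G' d HG') as Hb. apply Rabs_le_inv in Hb. unfold model_grad in Hb. lra.
Qed.

Lemma phi_le u D d c : 0 < D -> (forall G, Gs u D G -> slope u G d <= c) -> phi u D d <= c.
Proof.
  intros HD Hc. destruct (HGs u D HD) as [[G0 HG0] _].
  apply Rsup_le; [exists (slope u G0 d), G0; auto|]. intros s [G [HG ->]]. apply Hc; auto.
Qed.

Lemma psi_ge u D h e : 0 < D -> 0 < vnorm h ->
  (forall G, Gs u D G -> slope u G h <= - e) -> e / vnorm h <= psi u D.
Proof.
  intros HD Hh Hslope. destruct (HGs u D HD) as [[G0 HG0] _].
  destruct (model_slope_bounded u D HD) as (B & HB & Hbd).
  set (h1 := vscal (/ vnorm h) h).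
  assert (Hh1 : vnorm h1 = 1)
    by (unfold h1; rewrite vnorm_scal, Rabs_pos_eq; [field|left; apply Rinv_0_lt_compat]; lra).
  assert (Hphi : phi u D h1 <= - (e / vnorm h)).
  { apply phi_le; auto. intros G HG. unfold h1. rewrite dot_scalr.
    apply Rmult_le_reg_l with (vnorm h); auto. rewrite <- Rmult_assoc, Rinv_r by lra.
    specialize (Hslope G HG). replace (vnorm h * - (e / vnorm h)) with (- e) by (field; lra). lra. }
  unfold Defs.psi. enough (Rinf (fun s => exists h0 : vec n, vnorm h0 <= 1 /\ s = phi u D h0) <= phi u D h1) by lra.
  apply Rinf_lb with (- B); [exists (phi u D h1), h1; split; auto; lra| |exists h1; split; auto; lra].
  intros s [h0 [Hh0 ->]]. pose proof (phi_ge_slope u D h0 G0 HD HG0).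
  pose proof (Hbd G0 h0 HG0) as Hb. apply Rabs_le_inv in Hb.
  assert (B * vnorm h0 <= B) by (pose proof (vnorm_nonneg n h0); nra). lra.
Qed.

End ModelFunction.

Section Composite.
Variables (m n : nat) (J : vec m -> vec n -> R)
  (Jy : vec m -> vec n -> vec m) (Ju : vec m -> vec n -> vec n) (S : vec n -> vec m).
Hypotheses (HJ : has_gradients J Jy Ju) (HJy : continuous2 Jy) (HJu : continuous2 Ju)
  (HSlip : loc_lipschitz S).

Local Notation f := (compf J S).

Lemma gradients_continuous x0 e : 0 < e -> exists del, 0 < del /\ forall x, vnorm (vsub x x0) < del ->
  vnorm (vsub (Jy (S x) x) (Jy (S x0) x0)) < e /\ vnorm (vsub (Ju (S x) x) (Ju (S x0) x0)) < e.
Proof.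
  intros He. destruct (HJy (S x0) x0 e He) as (d1 & Hd1 & Hcy).
  destruct (HJu (S x0) x0 e He) as (d2 & Hd2 & Hcu).
  set (d := Rmin d1 d2). assert (Hd : 0 < d) by (apply Rmin_glb_lt; auto).
  assert (d <= d1) by apply Rmin_l. assert (d <= d2) by apply Rmin_r.
  destruct (S_continuous m n S HSlip x0 (d / 2) ltac:(lra)) as (dS & HdS & HS).
  exists (Rmin dS (d / 2)). split; [apply Rmin_glb_lt; lra|].
  intros x Hx. pose proof (Rmin_l dS (d / 2)). pose proof (Rmin_r dS (d / 2)).
  specialize (HS x ltac:(lra)). split; [apply Hcy|apply Hcu]; lra.
Qed.

Lemma compf_local_lipschitz x0 : exists r K, 0 < r /\ 0 <= K /\
  forall y y', vnorm (vsub y x0) < r -> vnorm (vsub y' x0) < r ->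
    Rabs (f y' - f y) <= K * vnorm (vsub y' y).
Proof.
  destruct (J_uniform_linearization m n J Jy Ju HJ HJy HJu (S x0) x0 1 ltac:(lra)) as (del & Hdel & HJl).
  destruct (S_local_lipschitz m n S HSlip x0) as (r & L & Hr & HL & HSL).
  set (a0 := Jy (S x0) x0) in *. set (b0 := Ju (S x0) x0) in *.
  pose proof (vnorm_nonneg m a0); pose proof (vnorm_nonneg n b0).
  set (r' := Rmin r (del / (L + 1))).
  assert (Hr' : 0 < r') by (apply Rmin_glb_lt; auto; apply Rdiv_lt_0_compat; lra).
  pose proof (Rmin_l r (del / (L + 1))) as Hr'r. pose proof (Rmin_r r (del / (L + 1))) as Hr'd. fold r' in Hr'r, Hr'd.
  exists r', ((vnorm a0 + 1) * L + vnorm b0 + 1). repeat split; auto; [nra|].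
  assert (Hin : forall y, vnorm (vsub y x0) < r' -> vnorm (vsub (S y) (S x0)) + vnorm (vsub y x0) < del).
  { intros y Hy. specialize (HSL y x0 ltac:(lra) ltac:(rewrite vnorm_sub_self; lra)).
    assert ((L + 1) * vnorm (vsub y x0) < del).
    { apply Rmult_lt_reg_r with (/ (L + 1)); [apply Rinv_0_lt_compat; lra|].
      replace ((L + 1) * vnorm (vsub y x0) * / (L + 1)) with (vnorm (vsub y x0)) by (field; lra).
      unfold Rdiv in Hr'd. lra. }
    lra. }
  intros y y' Hy Hy'.
  specialize (HJl (S y) y (vsub (S y') (S y)) (vsub y' y) (Hin y Hy)).
  replace (vadd (S y) (vsub (S y') (S y))) with (S y') in HJl by vec_ext.
  replace (vadd y (vsub y' y)) with y' in HJl by vec_ext.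
  specialize (HJl (Hin y' Hy')).
  assert (Hs : vnorm (vsub (S y') (S y)) <= L * vnorm (vsub y' y)) by (apply HSL; lra).
  unfold compf. apply Rabs_le_inv in HJl.
  pose proof (dot_abs_le m a0 (vsub (S y') (S y))) as Ha. pose proof (dot_abs_le n b0 (vsub y' y)) as Hb.
  apply Rabs_le_inv in Ha. apply Rabs_le_inv in Hb.
  pose proof (vnorm_nonneg n (vsub y' y)).
  assert (vnorm a0 * vnorm (vsub (S y') (S y)) <= vnorm a0 * (L * vnorm (vsub y' y)))
    by (apply Rmult_le_compat_l; auto).
  apply Rabs_le. nra.
Qed.

Lemma compf_continuous x0 e : 0 < e ->
  exists del, 0 < del /\ forall y, vnorm (vsub y x0) < del -> Rabs (f y - f x0) < e.
Proof.
  intros He. destruct (compf_local_lipschitz x0) as (r & K & Hr & HK & HL).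
  assert (Hq : 0 < e / (K + 1)) by (apply Rdiv_lt_0_compat; lra).
  exists (Rmin r (e / (K + 1))). split; [apply Rmin_glb_lt; auto|].
  intros y Hy. pose proof (Rmin_l r (e / (K + 1))). pose proof (Rmin_r r (e / (K + 1))).
  specialize (HL x0 y ltac:(rewrite vnorm_sub_self; lra) ltac:(lra)).
  assert ((K + 1) * vnorm (vsub y x0) < e).
  { apply Rmult_lt_reg_r with (/ (K + 1)); [apply Rinv_0_lt_compat; lra|].
    replace ((K + 1) * vnorm (vsub y x0) * / (K + 1)) with (vnorm (vsub y x0)) by (field; lra).
    unfold Rdiv in *. lra. }
  pose proof (vnorm_nonneg n (vsub y x0)). nra.
Qed.

Lemma frechet_diff_dir_deriv x A h : frechet_diff S x A -> dir_deriv S x h (mvmul A h).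
Proof.
  intros HF eps He. pose proof (vnorm_nonneg n h).
  destruct (HF (eps / (vnorm h + 1))) as (del & Hdel & Hrem); [apply Rdiv_lt_0_compat; lra|].
  exists (del / (vnorm h + 1)). split; [apply Rdiv_lt_0_compat; lra|]. intros t Ht.
  assert (Hth : vnorm (vscal t h) < del).
  { rewrite vnorm_scal, Rabs_pos_eq by lra.
    apply Rle_lt_trans with (t * (vnorm h + 1)); [nra|].
    apply Rmult_lt_reg_r with (/ (vnorm h + 1)); [apply Rinv_0_lt_compat; lra|].
    replace (t * (vnorm h + 1) * / (vnorm h + 1)) with t by (field; lra). unfold Rdiv in Ht. lra. }
  specialize (Hrem _ Hth). rewrite vnorm_scal, Rabs_pos_eq, mvmul_scal in Hrem by lra.
  replace (vsub (vscal (/ t) (vsub (S (vadd x (vscal t h))) (S x))) (mvmul A h))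
    with (vscal (/ t) (vsub (vsub (S (vadd x (vscal t h))) (S x)) (vscal t (mvmul A h))))
    by (apply functional_extensionality; intros; unfold vscal, vsub; field; lra).
  rewrite vnorm_scal, Rabs_pos_eq by (left; apply Rinv_0_lt_compat; lra).
  apply Rmult_le_reg_l with t; [lra|]. rewrite <- Rmult_assoc, Rinv_r, Rmult_1_l by lra.
  apply Rle_trans with (eps / (vnorm h + 1) * (t * vnorm h)); auto.
  replace (eps / (vnorm h + 1) * (t * vnorm h)) with (t * eps * (vnorm h / (vnorm h + 1))) by (field; lra).
  assert (vnorm h / (vnorm h + 1) <= 1).
  { apply Rmult_le_reg_r with (vnorm h + 1); [lra|]. unfold Rdiv. rewrite Rmult_assoc, Rinv_l by lra. lra. }
  assert (0 <= t * eps) by nra. nra.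
Qed.

Lemma compf_quotient_lower x h v : dir_deriv S x h v ->
  forall eta, 0 < eta -> exists tau, 0 < tau /\ forall t, 0 < t < tau ->
    dot (Jy (S x) x) v + dot (Ju (S x) x) h - eta <= (f (vadd x (vscal t h)) - f x) / t.
Proof.
  intros Hdir eta Heta.
  set (ax := Jy (S x) x). set (bx := Ju (S x) x).
  pose proof (vnorm_nonneg m ax). pose proof (vnorm_nonneg n h). pose proof (vnorm_nonneg m v).
  set (e2 := eta / (2 * (vnorm ax + 1))). assert (He2 : 0 < e2) by (apply Rdiv_lt_0_compat; lra).
  set (k := vnorm v + e2 + vnorm h + 1). assert (Hk : 0 < k) by (unfold k; lra).
  destruct (HJ (S x) x (eta / (2 * k))) as (d1 & Hd1 & HJl); [apply Rdiv_lt_0_compat; lra|].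
  destruct (dir_deriv_increment m n S x h v e2 Hdir He2) as (d2 & Hd2 & Hinc).
  exists (Rmin d2 (d1 / k)). split; [apply Rmin_glb_lt; auto; apply Rdiv_lt_0_compat; lra|].
  intros t Ht. pose proof (Rmin_l d2 (d1 / k)). pose proof (Rmin_r d2 (d1 / k)).
  destruct (Hinc t ltac:(lra)) as (w & Hw & Ha).
  set (a := vsub (S (vadd x (vscal t h))) (S x)) in Ha.
  assert (Hsmall : vnorm a + vnorm (vscal t h) <= t * k).
  { rewrite Ha, !vnorm_scal, Rabs_pos_eq by lra. pose proof (vnorm_triang m v w). unfold k. nra. }
  assert (Htk : t * k < d1).
  { apply Rmult_lt_reg_r with (/ k); [apply Rinv_0_lt_compat; lra|].
    replace (t * k * / k) with t by (field; lra). unfold Rdiv in *. lra. }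
  specialize (HJl a (vscal t h) ltac:(lra)).
  replace (vadd (S x) a) with (S (vadd x (vscal t h))) in HJl by (unfold a; vec_ext).
  apply Rabs_le_inv in HJl as [HJl _]. fold ax bx in HJl.
  assert (Herr : eta / (2 * k) * (vnorm a + vnorm (vscal t h)) <= t * (eta / 2)).
  { apply Rle_trans with (eta / (2 * k) * (t * k)).
    - apply Rmult_le_compat_l; [left; apply Rdiv_lt_0_compat|]; lra.
    - right. field. lra. }
  assert (Hw2 : - (eta / 2) <= dot ax w).
  { pose proof (dot_ge m ax w).
    assert (vnorm ax * vnorm w <= vnorm ax * e2) by (apply Rmult_le_compat_l; lra).
    assert (vnorm ax * e2 <= eta / 2); [|lra].
    unfold e2. apply Rmult_le_reg_r with (2 * (vnorm ax + 1)); [lra|].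
    replace (vnorm ax * (eta / (2 * (vnorm ax + 1))) * (2 * (vnorm ax + 1))) with (vnorm ax * eta)
      by (field; lra). nra. }
  apply Rmult_le_compat_l with (r := t) in Hw2; [|lra].
  assert (Hdot : dot ax a = t * dot ax v + t * dot ax w) by (rewrite Ha, dot_scalr, dot_addr; ring).
  rewrite Hdot, dot_scalr in HJl.
  unfold compf. apply Rmult_le_reg_r with t; [lra|].
  unfold Rdiv. rewrite Rmult_assoc, Rinv_l, Rmult_1_r by lra. fold ax bx. lra.
Qed.

Lemma model_slope_continuous x0 h c e : 0 < e -> exists del, 0 < del /\
  forall W x G, mnorm W <= c -> vnorm (vsub x x0) < del -> mnorm (msub G W) < del ->
    Rabs (dot (model_grad Jy Ju S x G) h - dot (model_grad Jy Ju S x0 W) h) < e.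
Proof.
  intros He. set (a0 := Jy (S x0) x0). set (b0 := Ju (S x0) x0).
  pose proof (vnorm_nonneg m a0). pose proof (vnorm_nonneg n h). pose proof (Rabs_pos c).
  set (k := (vnorm a0 + 2 + Rabs c) * (vnorm h + 1)).
  assert (Hk : 0 < k) by (unfold k; nra).
  set (e1 := Rmin 1 (e / (2 * k))).
  assert (He1 : 0 < e1) by (apply Rmin_glb_lt; [lra|apply Rdiv_lt_0_compat; lra]).
  assert (He11 : e1 <= 1) by apply Rmin_l.
  assert (He1k : e1 * k < e).
  { apply Rle_lt_trans with (e / (2 * k) * k); [apply Rmult_le_compat_r; [lra|apply Rmin_r]|].
    replace (e / (2 * k) * k) with (e / 2) by (field; lra). lra. }
  destruct (gradients_continuous x0 e1 He1) as (dg & Hdg & Hg).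
  exists (Rmin dg e1). split; [apply Rmin_glb_lt; lra|].
  intros W x G HW Hx HG. pose proof (Rmin_l dg e1). pose proof (Rmin_r dg e1).
  destruct (Hg x ltac:(lra)) as [Ha Hb]. fold a0 b0 in Ha, Hb.
  set (ax := Jy (S x) x) in *. set (bx := Ju (S x) x) in *.
  rewrite !model_grad_dot. fold a0 b0 ax bx.
  replace (dot ax (mvmul G h) + dot bx h - (dot a0 (mvmul W h) + dot b0 h))
    with (dot ax (mvmul (msub G W) h) + dot (vsub ax a0) (mvmul W h) + dot (vsub bx b0) h)
    by (rewrite mvmul_msub, !dot_subl, dot_subr; ring).
  assert (Hax : vnorm ax <= vnorm a0 + 1).
  { replace ax with (vadd a0 (vsub ax a0)) by vec_ext. eapply Rle_trans; [apply vnorm_triang|lra]. }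
  pose proof (mnorm_spec m n (msub G W) h). pose proof (mnorm_spec m n W h).
  pose proof (mnorm_nonneg m n (msub G W)). pose proof (mnorm_nonneg m n W). pose proof (Rle_abs c).
  pose proof (dot_abs_le m ax (mvmul (msub G W) h)).
  pose proof (dot_abs_le m (vsub ax a0) (mvmul W h)). pose proof (dot_abs_le n (vsub bx b0) h).
  pose proof (vnorm_nonneg m ax). pose proof (vnorm_nonneg m (vsub ax a0)). pose proof (vnorm_nonneg n (vsub bx b0)).
  pose proof (vnorm_nonneg m (mvmul (msub G W) h)). pose proof (vnorm_nonneg m (mvmul W h)).
  assert (T1 : vnorm ax * vnorm (mvmul (msub G W) h) <= (vnorm a0 + 1) * (e1 * vnorm h))
    by (apply Rmult_le_compat; nra).
  assert (T2 : vnorm (vsub ax a0) * vnorm (mvmul W h) <= e1 * (Rabs c * vnorm h))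
    by (apply Rmult_le_compat; nra).
  assert (T3 : vnorm (vsub bx b0) * vnorm h <= e1 * vnorm h) by (apply Rmult_le_compat_r; lra).
  assert (Tsum : (vnorm a0 + 1) * (e1 * vnorm h) + e1 * (Rabs c * vnorm h) + e1 * vnorm h <= e1 * k)
    by (unfold k; nra).
  eapply Rle_lt_trans; [|apply He1k].
  eapply Rle_trans; [apply Rabs_triang|]. eapply Rle_trans; [apply Rplus_le_compat_r, Rabs_triang|]. lra.
Qed.

Lemma slope_le_of_quotient_le x A h eps del : 0 < del -> frechet_diff S x A ->
  (forall t, 0 < t < del -> (f (vadd x (vscal t h)) - f x) / t <= - eps) ->
  dot (model_grad Jy Ju S x A) h <= - eps.
Proof.
  intros Hdel HF Hq. rewrite model_grad_dot. apply Rle_plus_epsilon. intros eta Heta.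
  destruct (compf_quotient_lower x h (mvmul A h) (frechet_diff_dir_deriv x A h HF) eta Heta)
    as (tau & Htau & Hlow).
  assert (0 < Rmin tau del) by (apply Rmin_glb_lt; auto).
  pose proof (Rmin_l tau del). pose proof (Rmin_r tau del).
  specialize (Hlow (Rmin tau del / 2) ltac:(lra)). specialize (Hq (Rmin tau del / 2) ltac:(lra)). lra.
Qed.

Lemma bouligand_slope_le x0 h eps del : 0 < del ->
  (forall y t, vnorm (vsub y x0) < del -> 0 < t < del -> (f (vadd y (vscal t h)) - f y) / t <= - eps) ->
  forall W, bouligand S x0 W -> dot (model_grad Jy Ju S x0 W) h <= - eps.
Proof.
  intros Hdel Hq W (xj & Aj & Hx & HF & HA). apply Rle_plus_epsilon. intros e He.
  destruct (model_slope_continuous x0 h (mnorm W) e He) as (dc & Hdc & Hc).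
  destruct (Hx (Rmin del dc)) as [N1 HN1]; [apply Rmin_glb_lt; auto|].
  destruct (HA dc Hdc) as [N2 HN2].
  specialize (HN1 (Nat.max N1 N2) ltac:(lia)). specialize (HN2 (Nat.max N1 N2) ltac:(lia)).
  set (j := Nat.max N1 N2) in *.
  pose proof (Rmin_l del dc). pose proof (Rmin_r del dc).
  pose proof (slope_le_of_quotient_le (xj j) (Aj j) h eps del Hdel (HF j)
                (fun t Ht => Hq (xj j) t ltac:(lra) Ht)).
  specialize (Hc W (xj j) (Aj j) (Rle_refl _) ltac:(lra) HN2). apply Rabs_def2 in Hc. lra.
Qed.

Variable Gs : vec n -> R -> mat m n -> Prop.

Section UniformSlope.
Hypothesis HG2 : forall (uk : nat -> vec n) (Dk : nat -> R) (u : vec n),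
  (forall k, 0 < Dk k) -> vseq_conv uk u -> Rseq_conv Dk 0 -> ~ clarke_sub f u vzero ->
  forall eps, 0 < eps -> exists K, forall k, (K <= k)%nat ->
    forall G, Gs (uk k) (Dk k) G -> exists W, bouligand S u W /\ mnorm (msub G W) < eps.

(** This is where (G2) enters: it passes the negative slopes of the Bouligand elements
    at [ub] on to the sets [G(x,D)] for [x] near [ub] and small [D]. *)
Lemma model_slope_uniform ub h eps del : ~ clarke_sub f ub vzero -> 0 < eps -> 0 < del ->
  (forall y t, vnorm (vsub y ub) < del -> 0 < t < del -> (f (vadd y (vscal t h)) - f y) / t <= - eps) ->
  exists eta, 0 < eta /\ forall x D G, vnorm (vsub x ub) < eta -> 0 < D < eta -> Gs x D G ->
    dot (model_grad Jy Ju S x G) h <= - eps / 2.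
Proof.
  intros Hnst Heps Hdel Hq. apply NNPP. intros Hn.
  assert (Hseq : forall i : nat, exists p : vec n * R * mat m n,
    vnorm (vsub (fst (fst p)) ub) < / (INR i + 1) /\ 0 < snd (fst p) < / (INR i + 1) /\
    Gs (fst (fst p)) (snd (fst p)) (snd p) /\ - eps / 2 < dot (model_grad Jy Ju S (fst (fst p)) (snd p)) h).
  { intros i. apply NNPP. intros Hne. apply Hn. exists (/ (INR i + 1)). split; [apply RinvN_pos|].
    intros x D G Hx HD HG. apply Rnot_lt_le. intros Hlt. apply Hne. exists (x, D, G). auto. }
  destruct (choice _ Hseq) as [p Hp].
  set (xs := fun i => fst (fst (p i))). set (Ds := fun i => snd (fst (p i))).
  assert (Hxs : vseq_conv xs ub).
  { intros e He. destruct (inv_succ_eventually_lt e He) as [N HN]. exists N. intros k Hk.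
    specialize (HN k Hk). destruct (Hp k) as [Hk1 _]. unfold xs. lra. }
  assert (HDs : Rseq_conv Ds 0).
  { intros e He. destruct (inv_succ_eventually_lt e He) as [N HN]. exists N. intros k Hk.
    specialize (HN k Hk). destruct (Hp k) as [_ [Hk2 _]]. unfold Ds. rewrite Rminus_0_r, Rabs_pos_eq; lra. }
  destruct (bouligand_mnorm_bounded m n S HSlip ub) as [L HL].
  destruct (model_slope_continuous ub h L (eps / 2)) as (dc & Hdc & Hc); [lra|].
  destruct (HG2 xs Ds ub (fun k => proj1 (proj1 (proj2 (Hp k)))) Hxs HDs Hnst dc Hdc) as [K HK].
  destruct (inv_succ_eventually_lt dc Hdc) as [N HN].
  specialize (HN (Nat.max K N) ltac:(lia)). set (k := Nat.max K N) in *.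
  destruct (Hp k) as (Hxk & _ & HGk & Hslope).
  destruct (HK k ltac:(lia) (snd (p k)) HGk) as (W & HW & HGW).
  pose proof (bouligand_slope_le ub h eps del Hdel Hq W HW).
  specialize (Hc W (xs k) (snd (p k)) (HL W HW) ltac:(unfold xs; lra) HGW).
  apply Rabs_def2 in Hc. unfold xs in Hc. lra.
Qed.

End UniformSlope.

Lemma compf_increment_linearized ub eps : 0 < eps -> exists eta, 0 < eta /\
  forall x d, vnorm (vsub x ub) < eta -> vnorm (vsub (vadd x d) ub) < eta ->
    f (vadd x d) - f x <= dot (Jy (S x) x) (vsub (S (vadd x d)) (S x)) + dot (Ju (S x) x) d + eps * vnorm d.
Proof.
  intros Heps. destruct (S_local_lipschitz m n S HSlip ub) as (r & L & Hr & HL & HSL).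
  set (e1 := eps / (2 * (L + 1))). assert (He1 : 0 < e1) by (apply Rdiv_lt_0_compat; lra).
  destruct (J_uniform_linearization m n J Jy Ju HJ HJy HJu (S ub) ub e1 He1) as (dJ & HdJ & HJl).
  destruct (gradients_continuous ub e1 He1) as (dg & Hdg & Hg).
  set (eta := Rmin (Rmin r dg) (dJ / (L + 1))).
  assert (Heta : 0 < eta) by (repeat apply Rmin_glb_lt; try apply Rdiv_lt_0_compat; lra).
  assert (Hetar : eta <= r) by (eapply Rle_trans; [apply Rmin_l|apply Rmin_l]).
  assert (Hetag : eta <= dg) by (eapply Rle_trans; [apply Rmin_l|apply Rmin_r]).
  assert (HetaJ : (L + 1) * eta <= dJ).
  { apply Rle_trans with ((L + 1) * (dJ / (L + 1))); [apply Rmult_le_compat_l; [lra|apply Rmin_r]|].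
    right. field. lra. }
  exists eta. split; auto. intros x d Hx Hxd.
  assert (Hin : forall y, vnorm (vsub y ub) < eta -> vnorm (vsub (S y) (S ub)) + vnorm (vsub y ub) < dJ).
  { intros y Hy. pose proof (HSL y ub ltac:(lra) ltac:(rewrite vnorm_sub_self; lra)).
    pose proof (vnorm_nonneg n (vsub y ub)). nra. }
  specialize (HJl (S x) x (vsub (S (vadd x d)) (S x)) d (Hin x Hx)).
  replace (vadd (S x) (vsub (S (vadd x d)) (S x))) with (S (vadd x d)) in HJl by vec_ext.
  specialize (HJl (Hin _ Hxd)). apply Rabs_le_inv, proj2 in HJl.
  set (a := vsub (S (vadd x d)) (S x)) in *.
  assert (Ha : vnorm a <= L * vnorm d).
  { unfold a. eapply Rle_trans; [apply HSL; lra|].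
    replace (vsub (vadd x d) x) with d by vec_ext. lra. }
  destruct (Hg x ltac:(lra)) as [Hga Hgb].
  set (ax := Jy (S x) x) in *. set (bx := Ju (S x) x) in *.
  set (a0 := Jy (S ub) ub) in *. set (b0 := Ju (S ub) ub) in *.
  replace (dot a0 a) with (dot ax a + dot (vsub a0 ax) a) in HJl by (rewrite dot_subl; ring).
  replace (dot b0 d) with (dot bx d + dot (vsub b0 bx) d) in HJl by (rewrite dot_subl; ring).
  pose proof (dot_le m (vsub a0 ax) a) as Hda. pose proof (dot_le n (vsub b0 bx) d) as Hdb.
  rewrite vnorm_sub_sym in Hda, Hdb. pose proof (vnorm_nonneg m a). pose proof (vnorm_nonneg n d).
  assert (vnorm (vsub ax a0) * vnorm a <= e1 * vnorm a) by (apply Rmult_le_compat_r; lra).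
  assert (vnorm (vsub bx b0) * vnorm d <= e1 * vnorm d) by (apply Rmult_le_compat_r; lra).
  assert (2 * e1 * (vnorm a + vnorm d) <= eps * vnorm d).
  { apply Rle_trans with (2 * e1 * ((L + 1) * vnorm d)); [apply Rmult_le_compat_l; lra|].
    right. unfold e1. field. lra. }
  unfold compf. lra.
Qed.

Section ModelUpperApproximation.
Hypotheses
  (HGs : forall u D, 0 < D -> (exists G, Gs u D G) /\ (exists c, forall G, Gs u D G -> mnorm G <= c))
  (HG1 : forall u D, 0 < D -> forall xi W, vnorm (vsub xi u) <= D -> bouligand S xi W -> Gs u D W)
  (HD : forall u h, exists G, bouligand S u G /\ dir_deriv S u h (mvmul G h)).

Lemma S_increment_le_model x D d : 0 < D -> vnorm d <= D ->
  dot (Jy (S x) x) (vsub (S (vadd x d)) (S x)) + dot (Ju (S x) x) d <= phi Jy Ju S Gs x D d.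
Proof.
  intros HD0 Hd. rewrite dot_subr.
  enough (dot (Jy (S x) x) (S (vadd x d)) - dot (Jy (S x) x) (S x) <= phi Jy Ju S Gs x D d - dot (Ju (S x) x) d)
    by lra.
  apply (S_mean_value m n S HSlip HD). intros t Ht G HB.
  assert (HG : Gs x D G).
  { apply (HG1 x D HD0 (vadd x (vscal t d))); auto.
    replace (vsub (vadd x (vscal t d)) x) with (vscal t d) by vec_ext.
    rewrite vnorm_scal, Rabs_pos_eq by lra. pose proof (vnorm_nonneg n d). nra. }
  pose proof (phi_ge_slope m n Jy Ju S Gs HGs x D d G HD0 HG) as Hslope.
  rewrite model_grad_dot in Hslope. lra.
Qed.

(** This is where (G1) and (D) enter, through the mean value inequality for [S]. *)
Lemma model_upper_approximation ub eps : 0 < eps -> exists eta, 0 < eta /\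
  forall x D d, vnorm (vsub x ub) < eta -> 0 < D < eta -> vnorm d <= D ->
    f (vadd x d) - f x <= phi Jy Ju S Gs x D d + eps * vnorm d.
Proof.
  intros Heps. destruct (compf_increment_linearized ub eps Heps) as (eta & Heta & Hinc).
  exists (eta / 2). split; [lra|]. intros x D d Hx HD0 Hd.
  assert (Hxd : vnorm (vsub (vadd x d) ub) < eta).
  { replace (vsub (vadd x d) ub) with (vadd (vsub x ub) d) by vec_ext.
    eapply Rle_lt_trans; [apply vnorm_triang|lra]. }
  pose proof (Hinc x d ltac:(lra) Hxd). pose proof (S_increment_le_model x D d ltac:(lra) Hd). lra.
Qed.

End ModelUpperApproximation.

End Composite.

(** * Convergence of the trust-region method *)

Lemma ratio_test_decrease eta c P a : 0 <= eta -> 0 < c <= P -> eta < a / P -> eta * c <= a.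
Proof.
  intros Heta Hc Hr. apply Rmult_lt_compat_r with (r := P) in Hr; [|lra].
  unfold Rdiv in Hr. rewrite Rmult_assoc, Rinv_l, Rmult_1_r in Hr by lra. nra.
Qed.

Lemma ratio_test_pass eta P a err : 0 < P -> err < (1 - eta) * P -> P - err <= a -> eta < a / P.
Proof.
  intros HP Herr Ha. apply Rmult_lt_reg_r with P; auto.
  unfold Rdiv. rewrite Rmult_assoc, Rinv_l, Rmult_1_r by lra. lra.
Qed.

Lemma predicted_decrease_pos mu a D b : 0 < mu -> 0 < a -> 0 < D -> 0 <= b -> 0 < mu / 2 * a * min_div D a b.
Proof.
  intros. pose proof (min_div_pos D a b). apply Rmult_lt_0_compat; auto. apply Rmult_lt_0_compat; lra.
Qed.

Lemma predicted_decrease_ge mu a D b c D0 C : 0 < mu -> 0 < c <= a -> 0 < D0 <= D -> 0 <= b <= C ->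
  0 < C -> mu / 2 * c * Rmin D0 (c / C) <= mu / 2 * a * min_div D a b.
Proof.
  intros Hmu Hca HD Hb HC. pose proof (min_div_ge D a b D0 c C HD Hca Hb).
  assert (0 < Rmin D0 (c / C)) by (apply Rmin_glb_lt; [lra|apply Rdiv_lt_0_compat; lra]).
  apply Rmult_le_compat; try lra; [nra|]. apply Rmult_le_compat_l; lra.
Qed.

Lemma accumulation_point_descent_absurd n (F : vec n -> R) (x : nat -> vec n) ubar r kap :
  0 < r -> 0 < kap ->
  (forall e, 0 < e -> exists del, 0 < del /\ forall y, vnorm (vsub y ubar) < del -> Rabs (F y - F ubar) < e) ->
  (forall i j, (i <= j)%nat -> F (x j) <= F (x i)) ->
  accumulation_point x ubar ->
  (forall k, vnorm (vsub (x k) ubar) < r -> exists j, (k <= j)%nat /\ F (x j) <= F (x k) - kap) ->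
  False.
Proof.
  intros Hr Hkap Hc Hmono Hacc Hdesc.
  assert (Hlb : forall j, F ubar <= F (x j)).
  { intros j. apply Rnot_lt_le. intros Hlt.
    destruct (Hc (F ubar - F (x j))) as (del & Hdel & Hd); [lra|].
    destruct (Hacc del Hdel j) as (k & Hjk & Hk). specialize (Hd _ Hk).
    pose proof (Hmono j k Hjk). apply Rabs_def2 in Hd. lra. }
  assert (Hdown : forall N : nat, exists j, F (x j) <= F (x O) - INR N * kap).
  { induction N as [|N [j Hj]]; [exists O; simpl; lra|].
    destruct (Hacc r Hr j) as (k & Hjk & Hkr). destruct (Hdesc k Hkr) as (j' & Hkj' & Hj').
    pose proof (Hmono j k Hjk). exists j'. rewrite S_INR. lra. }
  destruct (INR_unbounded ((F (x O) - F ubar) / kap)) as [N HN].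
  destruct (Hdown N) as [j Hj]. pose proof (Hlb j).
  apply Rmult_gt_compat_r with (r := kap) in HN; [|lra].
  unfold Rdiv in HN. rewrite Rmult_assoc, Rinv_l, Rmult_1_r in HN by lra. lra.
Qed.

Section TrustRegion.
Variables (m n : nat) (J : vec m -> vec n -> R)
  (Jy : vec m -> vec n -> vec m) (Ju : vec m -> vec n -> vec n)
  (S : vec n -> vec m) (Gs : vec n -> R -> mat m n -> Prop)
  (Dmin eta1 eta2 beta1 beta2 mu CH : R)
  (u : nat -> vec n) (Del : nat -> R) (g : nat -> vec n) (H : nat -> mat n n)
  (d : nat -> vec n) (rho : nat -> R).
Hypotheses (HDmin : 0 < Dmin) (Heta : 0 < eta1 < eta2) (Heta2 : eta2 < 1)
  (Hbeta : 0 < beta1 < 1) (Hmu : 0 < mu <= 1) (HCH : 0 < CH) (HHk : forall k, mnorm (H k) <= CH)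
  (Hrun : TR_run J Jy Ju S Gs Dmin eta1 eta2 beta1 beta2 mu u Del g H d rho)
  (Hnoterm : forall k, g k <> vzero).

Local Notation f := (compf J S).
Local Notation phi := (phi Jy Ju S Gs).
Local Notation psi := (psi Jy Ju S Gs).

Lemma TR_subgradient k : clarke_sub f (u k) (g k).
Proof. apply (proj2 Hrun k). Qed.

Lemma TR_reject k : rho k <= eta1 -> u (k + 1)%nat = u k /\ Del (k + 1)%nat = beta1 * Del k.
Proof. apply (proj2 Hrun k). Qed.

Lemma TR_accept k : eta1 < rho k -> u (k + 1)%nat = vadd (u k) (d k) /\ Dmin <= Del (k + 1)%nat.
Proof.
  intros Hr. destruct (proj2 Hrun k) as (_ & _ & _ & _ & _ & Hmid & Hbig).
  destruct (Rle_lt_dec (rho k) eta2) as [Hle|Hlt].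
  - destruct (Hmid (conj Hr Hle)) as [-> ->]. split; auto. apply Rmax_l.
  - destruct (Hbig Hlt) as [-> ->]. split; auto. apply Rmax_l.
Qed.

Lemma TR_radius_pos k : 0 < Del k.
Proof.
  induction k as [|k IH]; [pose proof (proj1 Hrun); lra|].
  replace (Datatypes.S k) with (k + 1)%nat by lia.
  destruct (Rle_lt_dec (rho k) eta1) as [Hr|Hr].
  - rewrite (proj2 (TR_reject k Hr)). nra.
  - pose proof (proj2 (TR_accept k Hr)). lra.
Qed.

Lemma TR_gnorm_pos k : 0 < vnorm (g k).
Proof.
  pose proof (vnorm_nonneg n (g k)). destruct (Req_dec (vnorm (g k)) 0) as [E|E]; [|lra].
  exfalso. apply (Hnoterm k), vnorm_eq0, E.
Qed.

Lemma TR_accept_decrease_large k : eta1 < rho k -> Dmin <= Del k ->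
  eta1 * (mu / 2 * vnorm (g k) * min_div (Del k) (vnorm (g k)) (mnorm (H k)))
    <= f (u k) - f (u (k + 1)%nat).
Proof.
  intros Hr HD. destruct (proj2 Hrun k) as (_ & _ & Hlarge & _). cbv zeta in Hlarge.
  destruct (Hlarge HD) as (_ & Hpred & Hrho). rewrite (proj1 (TR_accept k Hr)).
  rewrite Hrho in Hr. eapply (ratio_test_decrease eta1); [lra| |exact Hr].
  pose proof (TR_gnorm_pos k). pose proof (TR_radius_pos k). pose proof (mnorm_nonneg n n (H k)).
  split; auto. apply predicted_decrease_pos; lra.
Qed.

Lemma TR_accept_decrease_small k : eta1 < rho k -> Del k < Dmin ->
  vnorm (g k) * Del k < psi (u k) (Del k) /\
  eta1 * (mu / 2 * psi (u k) (Del k) * min_div (Del k) (psi (u k) (Del k)) (mnorm (H k)))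
    <= f (u k) - f (u (k + 1)%nat).
Proof.
  intros Hr HD. destruct (proj2 Hrun k) as (_ & _ & _ & Hsmall & _). cbv zeta in Hsmall.
  destruct (Hsmall HD) as (_ & Hpred & Hrho). rewrite (proj1 (TR_accept k Hr)).
  destruct (Rlt_dec (vnorm (g k) * Del k) (psi (u k) (Del k))) as [Hlt|]; [|lra].
  split; auto. rewrite Hrho in Hr. eapply (ratio_test_decrease eta1); [lra| |exact Hr].
  pose proof (TR_gnorm_pos k). pose proof (TR_radius_pos k).
  split; auto. apply predicted_decrease_pos; try nra. apply mnorm_nonneg.
Qed.

Lemma TR_values_nonincreasing i j : (i <= j)%nat -> f (u j) <= f (u i).
Proof.
  induction 1 as [|j _ IH]; [lra|]. replace (Datatypes.S j) with (j + 1)%nat by lia.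
  enough (f (u (j + 1)%nat) <= f (u j)) by lra.
  destruct (Rle_lt_dec (rho j) eta1) as [Hr|Hr]; [rewrite (proj1 (TR_reject j Hr)); lra|].
  pose proof (TR_gnorm_pos j). pose proof (TR_radius_pos j). pose proof (mnorm_nonneg n n (H j)).
  destruct (Rle_lt_dec Dmin (Del j)) as [HD|HD].
  - pose proof (TR_accept_decrease_large j Hr HD).
    pose proof (predicted_decrease_pos mu (vnorm (g j)) (Del j) (mnorm (H j))
                  ltac:(lra) ltac:(lra) ltac:(lra) ltac:(lra)).
    nra.
  - destruct (TR_accept_decrease_small j Hr HD) as [Hpsi Hdec].
    pose proof (predicted_decrease_pos mu (psi (u j) (Del j)) (Del j) (mnorm (H j))
                  ltac:(lra) ltac:(nra) ltac:(lra) ltac:(lra)).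
    nra.
Qed.

Section NearAccumulation.
Variables (near : vec n -> Prop) (dstar : R).
Hypotheses (Hdstar : 0 < dstar)
  (Hsmall_accepted : forall k, near (u k) -> Del k < Rmin dstar Dmin -> eta1 < rho k).

Lemma TR_radius_lower_bound k : near (u k) -> beta1 * Rmin dstar Dmin <= Del k.
Proof.
  assert (Hm : 0 < Rmin dstar Dmin) by (apply Rmin_glb_lt; lra).
  pose proof (Rmin_r dstar Dmin).
  destruct k as [|k]; intros Hk; [pose proof (proj1 Hrun); nra|].
  replace (Datatypes.S k) with (k + 1)%nat in * by lia.
  destruct (Rle_lt_dec (rho k) eta1) as [Hr|Hr].
  - destruct (TR_reject k Hr) as [Hu ->]. rewrite Hu in Hk.
    apply Rmult_le_compat_l; [lra|]. apply Rnot_lt_le. intros HD.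
    specialize (Hsmall_accepted k Hk HD). lra.
  - pose proof (proj2 (TR_accept k Hr)). nra.
Qed.

Lemma TR_eventually_accepted k : near (u k) -> exists j, (k <= j)%nat /\ u j = u k /\ eta1 < rho j.
Proof.
  intros Hk. apply NNPP. intros Hnone.
  assert (Hrejected : forall i, u (k + i)%nat = u k /\ Del (k + i)%nat = beta1 ^ i * Del k).
  { induction i as [|i [Hu HD]]; [rewrite Nat.add_0_r; simpl; split; auto; ring|].
    assert (Hr : rho (k + i)%nat <= eta1).
    { apply Rnot_lt_le. intros Hr. apply Hnone. exists (k + i)%nat. repeat split; auto; lia. }
    replace (k + Datatypes.S i)%nat with (k + i + 1)%nat by lia.
    destruct (TR_reject (k + i) Hr) as [-> ->]. rewrite Hu, HD. split; auto. simpl. ring. }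
  pose proof (TR_radius_pos k) as HDk.
  assert (Hm : 0 < Rmin dstar Dmin) by (apply Rmin_glb_lt; lra).
  destruct (pow_lt_1_zero beta1 ltac:(rewrite Rabs_pos_eq; lra) (Rmin dstar Dmin / Del k)
              ltac:(apply Rdiv_lt_0_compat; lra)) as [N HN].
  specialize (HN N (le_n N)). rewrite Rabs_pos_eq in HN by (apply pow_le; lra).
  destruct (Hrejected N) as [HuN HDN].
  assert (Hsmall : Del (k + N)%nat < Rmin dstar Dmin).
  { rewrite HDN. apply Rmult_lt_reg_r with (/ Del k); [apply Rinv_0_lt_compat; lra|].
    rewrite Rmult_assoc, Rinv_r by lra. unfold Rdiv in HN. lra. }
  apply Hnone. exists (k + N)%nat. repeat split; [lia|auto|].
  apply Hsmall_accepted; [rewrite HuN|]; auto.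
Qed.

End NearAccumulation.

Lemma TR_accept_decrease_uniform c0 Dlow : 0 < c0 -> 0 < Dlow -> exists kap, 0 < kap /\
  forall k, c0 <= vnorm (g k) -> Dlow <= Del k -> eta1 < rho k -> f (u (k + 1)%nat) <= f (u k) - kap.
Proof.
  intros Hc0 HDlow.
  set (k1 := mu / 2 * c0 * Rmin Dmin (c0 / CH)).
  set (k2 := mu / 2 * (c0 * Dlow) * Rmin Dlow (c0 * Dlow / CH)).
  assert (Hk1 : 0 < k1).
  { unfold k1. pose proof (Rmin_glb_lt Dmin (c0 / CH) 0 HDmin (Rdiv_lt_0_compat _ _ Hc0 HCH)).
    assert (0 < mu / 2 * c0) by nra. nra. }
  assert (Hk2 : 0 < k2).
  { unfold k2. assert (Hp0 : 0 < c0 * Dlow) by nra.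
    pose proof (Rmin_glb_lt Dlow (c0 * Dlow / CH) 0 HDlow (Rdiv_lt_0_compat _ _ Hp0 HCH)).
    assert (0 < mu / 2 * (c0 * Dlow)) by nra. nra. }
  exists (eta1 * Rmin k1 k2). split; [apply Rmult_lt_0_compat; [lra|apply Rmin_glb_lt; lra]|].
  intros k Hg HD Hr. pose proof (mnorm_nonneg n n (H k)). pose proof (HHk k).
  assert (Hkap : forall X, Rmin k1 k2 <= X -> eta1 * Rmin k1 k2 <= eta1 * X)
    by (intros; apply Rmult_le_compat_l; lra).
  destruct (Rle_lt_dec Dmin (Del k)) as [HDk|HDk].
  - pose proof (TR_accept_decrease_large k Hr HDk) as Hdec.
    pose proof (predicted_decrease_ge mu (vnorm (g k)) (Del k) (mnorm (H k)) c0 Dmin CH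
                  ltac:(lra) ltac:(lra) ltac:(lra) ltac:(lra) HCH) as Hge. fold k1 in Hge.
    pose proof (Rmin_l k1 k2) as Hmin. specialize (Hkap _ (Rle_trans _ _ _ Hmin Hge)). lra.
  - destruct (TR_accept_decrease_small k Hr HDk) as [Hpsi Hdec].
    assert (c0 * Dlow <= vnorm (g k) * Del k) by (apply Rmult_le_compat; lra).
    pose proof (predicted_decrease_ge mu (psi (u k) (Del k)) (Del k) (mnorm (H k)) (c0 * Dlow) Dlow CH
                  ltac:(lra) ltac:(nra) ltac:(lra) ltac:(lra) HCH) as Hge. fold k2 in Hge.
    pose proof (Rmin_r k1 k2) as Hmin. specialize (Hkap _ (Rle_trans _ _ _ Hmin Hge)). lra.
Qed.

(** A step whose model decrease is of order [c D] is accepted once the model error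
    [(1 - eta1) mu c / 8 |d|] and the curvature term [CH D^2] are small compared to it. *)
Lemma TR_small_step_accepted k c : 0 < c -> Del k < Dmin ->
  c <= psi (u k) (Del k) -> vnorm (g k) * Del k < c -> CH * Del k <= (1 - eta1) * mu * c / 4 ->
  f (vadd (u k) (d k)) - f (u k) <= phi (u k) (Del k) (d k) + (1 - eta1) * mu * c / 8 * vnorm (d k) ->
  eta1 < rho k.
Proof.
  intros Hc HDk Hpsi HgD HCHD Happ. pose proof (TR_radius_pos k) as HD0.
  destruct (proj2 Hrun k) as (_ & _ & _ & Hsmall & _). cbv zeta in Hsmall.
  destruct (Hsmall HDk) as (Hdk & Hpred & Hrho). set (D := Del k) in *. set (ps := psi (u k) D) in *.
  set (epsx := (1 - eta1) * mu * c / 8) in *.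
  assert (Hepsx : 0 < epsx)
    by (unfold epsx; apply Rdiv_lt_0_compat; [repeat apply Rmult_lt_0_compat|]; lra).
  destruct (Rlt_dec (vnorm (g k) * D) ps) as [_|]; [|lra]. rewrite Hrho.
  pose proof (mnorm_nonneg n n (H k)). pose proof (HHk k).
  assert (Hmd : D <= min_div D ps (mnorm (H k))).
  { replace D with (Rmin D (c / CH)) at 1; [apply min_div_ge; lra|].
    apply Rmin_left. apply Rmult_le_reg_r with CH; [lra|]. unfold Rdiv.
    rewrite Rmult_assoc, Rinv_l by lra. assert ((1 - eta1) * mu <= 1) by nra. nra. }
  set (P := f (u k) - (f (u k) + phi (u k) D (d k) + / 2 * quad (d k) (H k))) in *.
  assert (HP : mu / 2 * c * D <= P).
  { eapply Rle_trans; [|apply Hpred]. apply Rmult_le_compat; nra. }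
  pose proof (quad_bound n (d k) (H k)) as Hq. apply Rabs_le_inv in Hq.
  pose proof (vnorm_nonneg n (d k)).
  assert (mnorm (H k) * (vnorm (d k) * vnorm (d k)) <= CH * (D * D)) by (apply Rmult_le_compat; nra).
  assert (CH * (D * D) <= 2 * epsx * D) by (unfold epsx; nra).
  assert (HcD : 0 < mu / 2 * c * D) by (repeat apply Rmult_lt_0_compat; lra).
  assert (HeD : 0 < epsx * D) by (apply Rmult_lt_0_compat; lra).
  assert (epsx * vnorm (d k) <= epsx * D) by (apply Rmult_le_compat_l; lra).
  apply (ratio_test_pass _ _ _ (2 * epsx * D)); [lra| |unfold P in *; lra].
  assert (HP4 : (1 - eta1) * (mu / 2 * c * D) = 4 * (epsx * D)) by (unfold epsx; field).
  assert ((1 - eta1) * (mu / 2 * c * D) <= (1 - eta1) * P) by (apply Rmult_le_compat_l; lra).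
  lra.
Qed.

Lemma TR_small_radius_accepted (near : vec n -> Prop) c Kg eta0 : 0 < c -> 0 < eta0 -> 0 <= Kg ->
  (forall k, near (u k) -> vnorm (g k) <= Kg) ->
  (forall x D, near x -> 0 < D < eta0 -> c <= psi x D) ->
  (forall x D dd, near x -> 0 < D < eta0 -> vnorm dd <= D ->
     f (vadd x dd) - f x <= phi x D dd + (1 - eta1) * mu * c / 8 * vnorm dd) ->
  exists dstar, 0 < dstar /\ forall k, near (u k) -> Del k < Rmin dstar Dmin -> eta1 < rho k.
Proof.
  intros Hc Heta0 HKg Hg Hpsi Happrox.
  assert (Hcurv : 0 < (1 - eta1) * mu * c / 4)
    by (apply Rdiv_lt_0_compat; [repeat apply Rmult_lt_0_compat|]; lra).
  set (dstar := Rmin (Rmin (eta0 / 2) (c / (2 * (Kg + 1)))) ((1 - eta1) * mu * c / 4 / CH)).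
  assert (Hdstar : 0 < dstar) by (apply Rmin_glb_lt; [apply Rmin_glb_lt|]; apply Rdiv_lt_0_compat; lra).
  assert (Hd1 : dstar <= eta0 / 2) by (eapply Rle_trans; [apply Rmin_l|apply Rmin_l]).
  assert (Hd2 : dstar * (2 * (Kg + 1)) <= c).
  { apply Rle_trans with (c / (2 * (Kg + 1)) * (2 * (Kg + 1))); [|right; field; lra].
    apply Rmult_le_compat_r; [lra|]. eapply Rle_trans; [apply Rmin_l|apply Rmin_r]. }
  assert (Hd3 : CH * dstar <= (1 - eta1) * mu * c / 4).
  { apply Rle_trans with (CH * ((1 - eta1) * mu * c / 4 / CH)); [|right; field; lra].
    apply Rmult_le_compat_l; [lra|apply Rmin_r]. }
  exists dstar. split; auto. intros k Hk HD.
  pose proof (Rmin_l dstar Dmin). pose proof (Rmin_r dstar Dmin). pose proof (TR_radius_pos k).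
  pose proof (Hg k Hk). pose proof (vnorm_nonneg n (g k)).
  apply (TR_small_step_accepted k c); auto; try lra.
  - apply Hpsi; auto; lra.
  - nra.
  - assert (CH * Del k <= CH * dstar) by (apply Rmult_le_compat_l; lra). lra.
  - apply Happrox; auto; [lra|]. destruct (proj2 Hrun k) as (_ & _ & _ & Hsmall & _).
    apply Hsmall. lra.
Qed.

Hypotheses (HJ : has_gradients J Jy Ju) (HJy : continuous2 Jy) (HJu : continuous2 Ju)
  (HSlip : loc_lipschitz S)
  (HGs : forall u D, 0 < D -> (exists G, Gs u D G) /\ (exists c, forall G, Gs u D G -> mnorm G <= c))
  (HG1 : forall u D, 0 < D -> forall xi W, vnorm (vsub xi u) <= D -> bouligand S xi W -> Gs u D W)
  (HG2 : forall (uk : nat -> vec n) (Dk : nat -> R) (u : vec n),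
    (forall k, 0 < Dk k) -> vseq_conv uk u -> Rseq_conv Dk 0 -> ~ clarke_sub f u vzero ->
    forall eps, 0 < eps -> exists K, forall k, (K <= k)%nat ->
      forall G, Gs (uk k) (Dk k) G -> exists W, bouligand S u W /\ mnorm (msub G W) < eps)
  (HD : forall u h, exists G, bouligand S u G /\ dir_deriv S u h (mvmul G h)).

Lemma TR_uniform_descent_near_nonstationary ubar : ~ clarke_sub f ubar vzero ->
  exists r kap, 0 < r /\ 0 < kap /\
    forall k, vnorm (vsub (u k) ubar) < r -> exists j, (k <= j)%nat /\ f (u j) <= f (u k) - kap.
Proof.
  intros Hnst.
  destruct (nonstationary_descent_direction n f ubar Hnst) as (h & eps & del & Hh & Heps & Hdel & Hq).
  set (c := eps / 2 / vnorm h). assert (Hc : 0 < c) by (apply Rdiv_lt_0_compat; lra).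
  destruct (compf_local_lipschitz m n J Jy Ju S HJ HJy HJu HSlip ubar) as (r1 & K & Hr1 & HK & Hlip).
  destruct (model_slope_uniform m n J Jy Ju S HJ HJy HJu HSlip Gs HG2 ubar h eps del Hnst Heps Hdel Hq)
    as (eta_s & Hetas & Hslope).
  assert (Hepsx : 0 < (1 - eta1) * mu * c / 8)
    by (apply Rdiv_lt_0_compat; [apply Rmult_lt_0_compat; [apply Rmult_lt_0_compat|]|]; lra).
  destruct (model_upper_approximation m n J Jy Ju S HJ HJy HJu HSlip Gs HGs HG1 HD ubar _ Hepsx)
    as (eta_a & Hetaa & Happrox).
  set (r := Rmin (Rmin (del / 2) (r1 / 2)) (Rmin eta_s eta_a)).
  assert (Hr : 0 < r) by (repeat apply Rmin_glb_lt; lra).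
  assert (Hrdel : r <= del / 2) by (eapply Rle_trans; [apply Rmin_l|apply Rmin_l]).
  assert (Hrr1 : r <= r1 / 2) by (eapply Rle_trans; [apply Rmin_l|apply Rmin_r]).
  assert (Hrs : r <= eta_s) by (eapply Rle_trans; [apply Rmin_r|apply Rmin_l]).
  assert (Hra : r <= eta_a) by (eapply Rle_trans; [apply Rmin_r|apply Rmin_r]).
  set (near := fun x => vnorm (vsub x ubar) < r).
  assert (Hgnorm : forall k, near (u k) -> c <= vnorm (g k)).
  { intros k Hk. apply (clarke_sub_norm_lower n f ubar h eps del Hh Heps Hdel Hq (u k));
      [unfold near in Hk; lra|apply TR_subgradient]. }
  destruct (TR_small_radius_accepted near c (K + 1) (Rmin eta_s eta_a)) as (dstar & Hdstar & Hsmall);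
    [exact Hc|apply Rmin_glb_lt; auto|lra| | | |].
  - intros k Hk. apply (clarke_sub_norm_upper n f ubar r1 K Hr1 HK Hlip (u k));
      [unfold near in Hk; lra|apply TR_subgradient].
  - intros x D Hx HD0. pose proof (Rmin_l eta_s eta_a). unfold near in Hx.
    apply (psi_ge m n Jy Ju S Gs HGs x D h (eps / 2)); [lra|auto|].
    intros G HG. specialize (Hslope x D G ltac:(lra) ltac:(lra) HG). lra.
  - intros x D dd Hx HD0 Hdd. pose proof (Rmin_r eta_s eta_a). unfold near in Hx. apply Happrox; auto; lra.
  - destruct (TR_accept_decrease_uniform c (beta1 * Rmin dstar Dmin)) as (kap & Hkap & Hdec);
      [auto|apply Rmult_lt_0_compat; [lra|apply Rmin_glb_lt; lra]|].
    exists r, kap. repeat split; auto. intros k Hk.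
    destruct (TR_eventually_accepted near dstar Hdstar Hsmall k Hk) as (j & Hkj & Huj & Hrj).
    assert (Hj : near (u j)) by (unfold near; rewrite Huj; exact Hk).
    exists (j + 1)%nat. split; [lia|]. rewrite <- Huj.
    apply Hdec; auto. apply (TR_radius_lower_bound near dstar Hdstar Hsmall j Hj).
Qed.

End TrustRegion.

Theorem corollary3p1
  (m n : nat) (J : vec m -> vec n -> R)
  (Jy : vec m -> vec n -> vec m) (Ju : vec m -> vec n -> vec n)
  (S : vec n -> vec m) (Gs : vec n -> R -> mat m n -> Prop)
  (HJ : has_gradients J Jy Ju) (HJy : continuous2 Jy) (HJu : continuous2 Ju)
  (HSlip : loc_lipschitz S)
  (HSdir : forall u h, exists v, dir_deriv S u h v)
  (HGs : forall u D, 0 < D ->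
           (exists G, Gs u D G) /\ (exists c, forall G, Gs u D G -> mnorm G <= c))
  (HG1 : forall u D, 0 < D -> forall xi W,
           vnorm (vsub xi u) <= D -> bouligand S xi W -> Gs u D W)
  (HG2 : forall (uk : nat -> vec n) (Dk : nat -> R) (u : vec n),
           (forall k, 0 < Dk k) -> vseq_conv uk u -> Rseq_conv Dk 0 ->
           ~ clarke_sub (compf J S) u vzero ->
           forall eps, 0 < eps -> exists K, forall k, (K <= k)%nat ->
             forall G, Gs (uk k) (Dk k) G ->
               exists W, bouligand S u W /\ mnorm (msub G W) < eps)
  (HD : forall u h, exists G, bouligand S u G /\ dir_deriv S u h (mvmul G h))
  (Dmin eta1 eta2 beta1 beta2 mu CH : R)
  (HDmin : 0 < Dmin) (Heta : 0 < eta1 < eta2) (Heta2 : eta2 < 1)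
  (Hbeta : 0 < beta1 < 1) (Hbeta2 : 1 < beta2) (Hmu : 0 < mu <= 1)
  (u : nat -> vec n) (Del : nat -> R) (g : nat -> vec n) (H : nat -> mat n n)
  (d : nat -> vec n) (rho : nat -> R)
  (Hrun : TR_run J Jy Ju S Gs Dmin eta1 eta2 beta1 beta2 mu u Del g H d rho)
  (Hnoterm : forall k, g k <> vzero)
  (HCH : 0 < CH) (HHk : forall k, mnorm (H k) <= CH) :
  forall ubar : vec n, accumulation_point u ubar -> clarke_sub (compf J S) ubar vzero.
Proof.
  intros ubar Hacc. apply NNPP. intros Hnst.
  destruct (TR_uniform_descent_near_nonstationary m n J Jy Ju S Gs Dmin eta1 eta2 beta1 beta2 mu CH
              u Del g H d rho HDmin Heta Heta2 Hbeta Hmu HCH HHk Hrun Hnoterm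
              HJ HJy HJu HSlip HGs HG1 HG2 HD ubar Hnst) as (r & kap & Hr & Hkap & Hdesc).
  apply (accumulation_point_descent_absurd n (compf J S) u ubar r kap Hr Hkap); auto.
  - apply (compf_continuous m n J Jy Ju S HJ HJy HJu HSlip).
  - apply (TR_values_nonincreasing m n J Jy Ju S Gs Dmin eta1 eta2 beta1 beta2 mu u Del g H d rho);
      auto.
Qed.
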